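(* Let $a>0$, $y_1\in\mathbb{R}$, $\alpha\in(0,\frac{\pi}{2})$ and let $f:\Omega\to\mathbb{C}$ be holomorphic on an open set $\Omega\subseteq\mathbb{C}$ containing $S^+_\alpha$. Then: (i) If $|f(z)|\le Ae^{B|z|}$ for all $z\in S^+_\alpha$ and some $A,B\ge0$, then for every $y_0\in\mathbb{R}$ $$\lim_{\varepsilon\to0^+}\int_0^\infty e^{-\varepsilon(y-y_0)^2}e^{ia(y-y_1)^2}f(y)\,dy=e^{i\alpha}\int_0^\infty e^{ia(ye^{i\alpha}-y_1)^2}f(ye^{i\alpha})\,dy,$$ where both integrands are absolutely integrable on $(0,\infty)$. (ii) If $|f(z)|\le Ae^{B\,\mathrm{Im}(z)}$ for all $z\in S^+_\alpha$ and some $A,B\ge0$, then $$\lim_{R\to\infty}\int_0^R e^{ia(y-y_1)^2}f(y)\,dy=e^{i\alpha}\int_0^\infty e^{ia(ye^{i\alpha}-y_1)^2}f(ye^{i\alpha})\,dy,$$ where the integrand on the right is absolutely integrable on $(0,\infty)$ and the one on the left is absolutely integrable on $(0,R)$ for each $R>0$.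
   Context: For $\alpha\in(0,\frac{\pi}{2})$, $S^+_\alpha:=\{z\in\mathbb{C}: z=0 \text{ or } 0\le \mathrm{Arg}(z)\le\alpha\}$ (closed sector). *)

From Stdlib Require Import Reals.
From Coquelicot Require Import Coquelicot.
Open Scope R_scope.

Definition cexp (z : C) : C :=
  (exp (Re z) * cos (Im z), exp (Re z) * sin (Im z))%R.

(* closed sector S^+_alpha = {0} ∪ {z : 0 <= Arg z <= alpha}, in polar form *)
Definition sector (alpha : R) (z : C) : Prop :=
  exists r theta : R, 0 <= r /\ 0 <= theta <= alpha /\
    z = Cmult (RtoC r) (cexp ((0:R), theta)).

Definition holomorphic_on (Omega : C -> Prop) (f : C -> C) : Prop :=
  forall z : C, Omega z -> ex_derive (K := C_AbsRing) (V := C_NormedModule) f z.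

Definition abs_integrable_0_inf (g : R -> C) : Prop :=
  ex_RInt_gen (fun y => Cmod (g y)) (at_point 0) (Rbar_locally p_infty).

Definition is_integral_0_inf (g : R -> C) (L : C) : Prop :=
  @is_RInt_gen C_R_NormedModule g (at_point 0) (Rbar_locally p_infty) L.

Definition is_integral_0_R (g : R -> C) (R0 : R) (L : C) : Prop :=
  @is_RInt C_R_NormedModule g 0 R0 L.

Definition abs_integrable_0_R (g : R -> C) (R0 : R) : Prop :=
  ex_RInt (fun y => Cmod (g y)) 0 R0.

Definition rotated_integrand (a y1 alpha : R) (f : C -> C) (y : R) : C :=
  let w := Cmult (RtoC y) (cexp ((0:R), alpha)) in
  Cmult (cexp (Cmult ((0:R), a) (Cmult (Cminus w (RtoC y1)) (Cminus w (RtoC y1))))) (f w).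

Definition real_integrand (a y1 : R) (f : C -> C) (y : R) : C :=
  Cmult (cexp ((0:R), a * (y - y1)^2)) (f (RtoC y)).

From Stdlib Require Import Reals Lra Psatz.
From Coquelicot Require Import Coquelicot.
Open Scope R_scope.

(** Write g(z) = e^{ia(z-y1)^2} f(z).  The proof is Cauchy's theorem on the
  circular sector of radius R and opening alpha, in polar coordinates
  z = r e^{it}, followed by a limit R -> +oo.

  On the rotated ray g has Gaussian decay e^{-2a cos(alpha) sin(alpha) y^2}.
  4. Part (ii): under |f(z)| <= A e^{B Im z} the arc integral is O(1/R), by the
     Jordan-type inequality t cos t <= sin t.
  5. Part (i): under |f(z)| <= A e^{B |z|} multiply g by e^{-eps (z-y0)^2}; for
     small eps the regularized arc integral vanishes as R -> +oo, and the
     regularized rotated integral is within O(eps) of the unregularized one.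
*)

Lemma Cmod_le_sum (x : C) : Cmod x <= Rabs (Re x) + Rabs (Im x).
Proof.
  destruct x as [u v]. unfold Cmod; simpl.
  pose proof (Rabs_pos u); pose proof (Rabs_pos v).
  rewrite <- (sqrt_Rsqr (Rabs u + Rabs v)) by lra.
  apply sqrt_le_1_alt. unfold Rsqr.
  assert (Rabs u * Rabs u = u * u) by (rewrite <- Rabs_mult; apply Rabs_right; nra).
  assert (Rabs v * Rabs v = v * v) by (rewrite <- Rabs_mult; apply Rabs_right; nra).
  nra.
Qed.

Lemma im_le_Cmod (w : C) : Rabs (snd w) <= Cmod w.
Proof. eapply Rle_trans; [apply Rmax_r | apply Rmax_Cmod]. Qed.

Lemma fst_le_Cmod (w : C) : fst w <= Cmod w.
Proof. eapply Rle_trans. apply Rle_abs. apply re_le_Cmod. Qed.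

Lemma Cminus_0 (z : C) : (z - RtoC 0)%C = z.
Proof. ring. Qed.

Lemma exp_le x y : x <= y -> exp x <= exp y.
Proof.
  intros H. destruct (Req_dec x y). subst; lra. apply Rlt_le, exp_increasing. lra.
Qed.

Definition cont_pt (h : R -> C) (x : R) : Prop :=
  forall eps, 0 < eps -> exists delta, 0 < delta /\
    forall y, Rabs (y - x) < delta -> Cmod (h y - h x) < eps.

Definition ccont_pt (g : C -> C) (z : C) : Prop :=
  forall eps, 0 < eps -> exists delta, 0 < delta /\
    forall w, Cmod (w - z) < delta -> Cmod (g w - g z) < eps.

Lemma rcont_of_derive (k : R -> R) x : ex_derive k x ->
  forall eps, 0 < eps -> exists delta, 0 < delta /\
    forall y, Rabs (y - x) < delta -> Rabs (k y - k x) < eps.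
Proof.
  intros Hd eps He.
  pose proof (ex_derive_continuous k x Hd) as Hc.
  assert (Hl : locally (k x) (fun z => Rabs (z - k x) < eps)).
  { exists (mkposreal eps He). intros z Hz. exact Hz. }
  destruct (Hc _ Hl) as [d Hd']. exists d. split. apply cond_pos.
  intros y Hy. apply Hd'. exact Hy.
Qed.

Lemma cont_pt_of_derive (h : R -> C) x :
  ex_derive (fun y => fst (h y)) x -> ex_derive (fun y => snd (h y)) x -> cont_pt h x.
Proof.
  intros H1 H2 eps He.
  destruct (rcont_of_derive _ _ H1 (eps/2)) as [d1 [Hd1 P1]]; [lra|].
  destruct (rcont_of_derive _ _ H2 (eps/2)) as [d2 [Hd2 P2]]; [lra|].
  exists (Rmin d1 d2). split. apply Rmin_pos; auto.
  intros y Hy. eapply Rle_lt_trans. apply Cmod_le_sum.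
  assert (Hy1 : Rabs (y - x) < d1) by (eapply Rlt_le_trans; [exact Hy| apply Rmin_l]).
  assert (Hy2 : Rabs (y - x) < d2) by (eapply Rlt_le_trans; [exact Hy| apply Rmin_r]).
  specialize (P1 y Hy1). specialize (P2 y Hy2).
  destruct (h y) as [a1 b1], (h x) as [a2 b2]; simpl in *.
  unfold Cminus, Cplus, Copp in *; simpl in *.
  replace (a1 + - a2) with (a1 - a2) by ring. replace (b1 + - b2) with (b1 - b2) by ring. lra.
Qed.

Lemma cont_pt_mult h1 h2 x :
  cont_pt h1 x -> cont_pt h2 x -> cont_pt (fun y => (h1 y * h2 y)%C) x.
Proof.
  intros H1 H2 eps He.
  set (M1 := Cmod (h1 x)). set (M2 := Cmod (h2 x)).
  assert (HM1 : 0 <= M1) by apply Cmod_ge_0. assert (HM2 : 0 <= M2) by apply Cmod_ge_0.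
  set (e := Rmin 1 (eps / (M1 + M2 + 2))).
  assert (He0 : 0 < e). { apply Rmin_pos. lra. apply Rdiv_lt_0_compat; lra. }
  assert (He1 : e <= 1) by apply Rmin_l.
  assert (He2 : e * (M1 + M2 + 2) <= eps).
  { assert (e <= eps / (M1 + M2 + 2)) by apply Rmin_r.
    apply Rmult_le_compat_r with (r := M1 + M2 + 2) in H; [|lra].
    field_simplify in H; lra. }
  destruct (H1 e He0) as [d1 [Hd1 P1]].
  destruct (H2 e He0) as [d2 [Hd2 P2]].
  exists (Rmin d1 d2). split. apply Rmin_pos; auto.
  intros y Hy.
  assert (Hy1 : Rabs (y - x) < d1) by (eapply Rlt_le_trans; [exact Hy| apply Rmin_l]).
  assert (Hy2 : Rabs (y - x) < d2) by (eapply Rlt_le_trans; [exact Hy| apply Rmin_r]).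
  specialize (P1 y Hy1). specialize (P2 y Hy2).
  replace (h1 y * h2 y - h1 x * h2 x)%C with
    ((h1 y - h1 x) * (h2 y - h2 x) + (h1 y - h1 x) * h2 x + h1 x * (h2 y - h2 x))%C by ring.
  eapply Rle_lt_trans. apply Cmod_triangle.
  eapply Rle_lt_trans. apply Rplus_le_compat_r. apply Cmod_triangle.
  rewrite !Cmod_mult. fold M1 M2.
  pose proof (Cmod_ge_0 (h1 y - h1 x)). pose proof (Cmod_ge_0 (h2 y - h2 x)).
  assert (Cmod (h1 y - h1 x) * Cmod (h2 y - h2 x) <= e * e) by (apply Rmult_le_compat; lra).
  assert (Cmod (h1 y - h1 x) * M2 <= e * M2) by (apply Rmult_le_compat_r; lra).
  assert (M1 * Cmod (h2 y - h2 x) <= M1 * e) by (apply Rmult_le_compat_l; lra).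
  nra.
Qed.

Lemma cont_pt_const (c : C) x : cont_pt (fun _ => c) x.
Proof.
  intros eps He. exists 1. split. lra. intros y _.
  replace (c - c)%C with (RtoC 0) by ring. rewrite Cmod_0. exact He.
Qed.

Lemma cont_pt_continuous (h : R -> C) x :
  cont_pt h x -> @continuous R_UniformSpace C_R_CompleteNormedModule h x.
Proof.
  intros Hh P [eps HP].
  destruct (Hh eps (cond_pos eps)) as [d [Hd Q]].
  exists (mkposreal d Hd). intros y Hy. apply HP.
  apply C_NormedModule_mixin_compat1. apply Q. exact Hy.
Qed.

Lemma ex_RInt_cont_pt (h : R -> C) a b :
  (forall z, Rmin a b <= z <= Rmax a b -> cont_pt h z) ->
  @ex_RInt C_R_CompleteNormedModule h a b.
Proof.
  intros H. apply ex_RInt_continuous. intros z Hz. apply cont_pt_continuous. auto.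
Qed.

Lemma ex_RInt_Cmod (h : R -> C) a b :
  (forall z, Rmin a b <= z <= Rmax a b -> cont_pt h z) ->
  ex_RInt (fun y => Cmod (h y)) a b.
Proof.
  intros H. apply (@ex_RInt_continuous R_CompleteNormedModule).
  intros z Hz P [eps HP].
  destruct (H z Hz eps (cond_pos eps)) as [d [Hd Q]].
  exists (mkposreal d Hd). intros y Hy. apply HP.
  change (Rabs (Cmod (h y) - Cmod (h z)) < eps).
  eapply Rle_lt_trans; [|apply (Q y Hy)].
  pose proof (Cmod_triangle (h y - h z) (h z)) as T1.
  pose proof (Cmod_triangle (h z - h y) (h y)) as T2.
  replace (h y - h z + h z)%C with (h y) in T1 by ring.
  replace (h z - h y + h y)%C with (h z) in T2 by ring.
  replace (h z - h y)%C with (- (h y - h z))%C in T2 by ring.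
  rewrite Cmod_opp in T2. apply Rabs_le. lra.
Qed.

Lemma RInt_Cmod_le (h : R -> C) (b : R -> R) a c lb : a <= c ->
  @ex_RInt C_R_CompleteNormedModule h a c -> (forall t, a <= t <= c -> Cmod (h t) <= b t) ->
  is_RInt b a c lb -> Cmod (@RInt C_R_CompleteNormedModule h a c) <= lb.
Proof.
  intros Hac Hex Hb Hib. rewrite Cmod_norm.
  apply (norm_RInt_le (V := C_R_NormedModule) h b a c _ lb Hac).
  - intros; rewrite <- Cmod_norm; auto.
  - apply (RInt_correct (V := C_R_CompleteNormedModule)). exact Hex.
  - exact Hib.
Qed.

Lemma RInt_Cmod_le_const (h : R -> C) a c M : a <= c ->
  @ex_RInt C_R_CompleteNormedModule h a c -> (forall t, a <= t <= c -> Cmod (h t) <= M) ->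
  Cmod (@RInt C_R_CompleteNormedModule h a c) <= (c - a) * M.
Proof.
  intros Hac Hex HM. apply (RInt_Cmod_le h (fun _ => M) a c); auto.
  apply (is_RInt_const (V := R_NormedModule)).
Qed.

Definition eit (t : R) : C := cexp ((0:R), t).

Lemma Cmod_cexp z : Cmod (cexp z) = exp (fst z).
Proof.
  destruct z as [p q]. unfold cexp, Cmod; simpl.
  replace (exp p * cos q * (exp p * cos q * 1) + exp p * sin q * (exp p * sin q * 1))
    with (exp p * exp p * ((sin q)^2 + (cos q)^2)) by ring.
  rewrite <- !Rsqr_pow2, sin2_cos2, Rmult_1_r. rewrite sqrt_square. reflexivity.
  apply Rlt_le, exp_pos.
Qed.

Lemma Cmod_eit t : Cmod (eit t) = 1.
Proof. unfold eit. rewrite Cmod_cexp. simpl. apply exp_0. Qed.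

Lemma eit_0 : eit 0 = 1%C.
Proof. unfold eit, cexp; simpl. rewrite exp_0, cos_0, sin_0. unfold RtoC. f_equal; ring. Qed.

Lemma cexp_add z1 z2 : cexp (z1 + z2)%C = (cexp z1 * cexp z2)%C.
Proof.
  destruct z1 as [p1 q1], z2 as [p2 q2]. unfold cexp, Cmult, Cplus; simpl.
  rewrite exp_plus, cos_plus, sin_plus. f_equal; ring.
Qed.

Definition scalC (s : R) (w : C) : C := (s * fst w, s * snd w).

Lemma Cmod_scalC s w : 0 <= s -> Cmod (scalC s w) = s * Cmod w.
Proof.
  intros Hs. unfold scalC. replace (s * fst w, s * snd w) with (RtoC s * w)%C.
  rewrite Cmod_mult, Cmod_R, Rabs_right; lra.
  destruct w; unfold Cmult, RtoC; simpl. f_equal; ring.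
Qed.

Lemma mvt01 (f df : R -> R) :
  (forall s, 0 <= s <= 1 -> is_derive f s (df s)) ->
  exists c, 0 <= c <= 1 /\ f 1 - f 0 = df c.
Proof.
  intros H. destruct (MVT_cor2 f df 0 1) as [c [Hc1 Hc2]]. lra.
  intros c Hc. apply is_derive_Reals. apply H. exact Hc.
  exists c. split. lra. rewrite Hc1. ring.
Qed.

(** Mean value theorem for s |-> e^{s w} - s k w, componentwise: the real and
    imaginary parts of e^w - 1 - k w are those of w (e^{c w} - k) for some
    c in [0,1]. *)
Lemma cexp_mvt (w k : C) :
  (exists c, 0 <= c <= 1 /\ fst (cexp w - 1 - k * w)%C = fst (w * (cexp (scalC c w) - k))%C) /\
  (exists c, 0 <= c <= 1 /\ snd (cexp w - 1 - k * w)%C = snd (w * (cexp (scalC c w) - k))%C).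
Proof.
  destruct w as [p q], k as [kr ki]. split.
  - destruct (mvt01 (fun s => exp (s*p) * cos (s*q) - s * (kr*p - ki*q))
       (fun s => p * (exp (s*p) * cos (s*q)) - q * (exp (s*p) * sin (s*q)) - (kr*p - ki*q)))
      as [c [Hc E]].
    { intros s _. auto_derive. auto. ring. }
    exists c. split. auto. unfold cexp, scalC, Cmult, Cminus, Cplus, Copp, RtoC in *; simpl in *.
    rewrite !Rmult_0_l, !Rmult_1_l, exp_0, cos_0 in E. nra.
  - destruct (mvt01 (fun s => exp (s*p) * sin (s*q) - s * (kr*q + ki*p))
       (fun s => p * (exp (s*p) * sin (s*q)) + q * (exp (s*p) * cos (s*q)) - (kr*q + ki*p)))
      as [c [Hc E]].
    { intros s _. auto_derive. auto. ring. }
    exists c. split. auto. unfold cexp, scalC, Cmult, Cminus, Cplus, Copp, RtoC in *; simpl in *.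
    rewrite !Rmult_0_l, !Rmult_1_l, exp_0, sin_0 in E. nra.
Qed.

Lemma cexp_mvt_bound (w k : C) M :
  (forall s, 0 <= s <= 1 -> Cmod (cexp (scalC s w) - k) <= M) ->
  Cmod (cexp w - 1 - k * w)%C <= 2 * Cmod w * M.
Proof.
  intros HM. destruct (cexp_mvt w k) as [[c1 [Hc1 E1]] [c2 [Hc2 E2]]].
  eapply Rle_trans. apply Cmod_le_sum. unfold Re, Im. rewrite E1, E2.
  assert (Rabs (fst (w * (cexp (scalC c1 w) - k))%C) <= Cmod w * M).
  { eapply Rle_trans. apply re_le_Cmod. rewrite Cmod_mult.
    apply Rmult_le_compat_l. apply Cmod_ge_0. auto. }
  assert (Rabs (snd (w * (cexp (scalC c2 w) - k))%C) <= Cmod w * M).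
  { eapply Rle_trans. apply im_le_Cmod. rewrite Cmod_mult.
    apply Rmult_le_compat_l. apply Cmod_ge_0. auto. }
  lra.
Qed.

Lemma cexp_sub1_bound w : Cmod (cexp w - 1)%C <= 2 * Cmod w * exp (Cmod w).
Proof.
  replace (cexp w - 1)%C with (cexp w - 1 - 0 * w)%C by ring.
  apply cexp_mvt_bound. intros s Hs.
  replace (cexp (scalC s w) - 0)%C with (cexp (scalC s w)) by ring.
  rewrite Cmod_cexp. apply exp_le. eapply Rle_trans. apply (fst_le_Cmod (scalC s w)).
  rewrite Cmod_scalC by lra. pose proof (Cmod_ge_0 w). nra.
Qed.

Lemma cexp_taylor1_bound w : Cmod (cexp w - 1 - w)%C <= 4 * Cmod w ^ 2 * exp (Cmod w).
Proof.
  replace (cexp w - 1 - w)%C with (cexp w - 1 - 1 * w)%C by ring.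
  eapply Rle_trans. apply (cexp_mvt_bound w 1 (2 * Cmod w * exp (Cmod w))).
  - intros s Hs. eapply Rle_trans. apply cexp_sub1_bound. rewrite Cmod_scalC by lra.
    pose proof (Cmod_ge_0 w). assert (exp (s * Cmod w) <= exp (Cmod w)) by (apply exp_le; nra).
    pose proof (exp_pos (s * Cmod w)).
    assert (s * Cmod w <= Cmod w) by nra.
    apply Rmult_le_compat; nra.
  - pose proof (Cmod_ge_0 w). pose proof (exp_pos (Cmod w)). nra.
Qed.

(** ** Complex differentiability *)

Definition has_cderiv (g : C -> C) (z l : C) : Prop :=
  forall eps, 0 < eps -> exists delta, 0 < delta /\
    forall w, Cmod (w - z) < delta -> Cmod (g w - g z - l * (w - z)) <= eps * Cmod (w - z).

Lemma has_cderiv_of_ex_derive g z :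
  ex_derive (K := C_AbsRing) (V := C_NormedModule) g z -> exists l, has_cderiv g z l.
Proof.
  intros [l [_ Hd]]. exists l. intros eps He.
  specialize (Hd z (fun P H => H) (mkposreal eps He)).
  destruct Hd as [d Hd]. exists d. split. apply cond_pos.
  intros w Hw. specialize (Hd w Hw). simpl in Hd.
  replace (l * (w - z))%C with ((w - z) * l)%C by ring. exact Hd.
Qed.

Lemma has_cderiv_lip g z l : has_cderiv g z l -> exists d, 0 < d /\
  forall w, Cmod (w - z) < d -> Cmod (g w - g z) <= (Cmod l + 1) * Cmod (w - z).
Proof.
  intros H. destruct (H 1 Rlt_0_1) as [d [Hd P]]. exists d. split; auto.
  intros w Hw. specialize (P w Hw).
  replace (g w - g z)%C with ((g w - g z - l * (w - z)) + l * (w - z))%C by ring.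
  eapply Rle_trans. apply Cmod_triangle. rewrite Cmod_mult. lra.
Qed.

Lemma has_cderiv_cont g z l : has_cderiv g z l -> ccont_pt g z.
Proof.
  intros H eps He. destruct (has_cderiv_lip g z l H) as [d [Hd P]].
  pose proof (Cmod_ge_0 l).
  exists (Rmin d (eps / (Cmod l + 2))). split.
  apply Rmin_pos; auto. apply Rdiv_lt_0_compat; lra.
  intros w Hw.
  assert (Hw1 : Cmod (w - z) < d) by (eapply Rlt_le_trans; [exact Hw|apply Rmin_l]).
  assert (Hw2 : Cmod (w - z) < eps / (Cmod l + 2)) by (eapply Rlt_le_trans; [exact Hw|apply Rmin_r]).
  specialize (P w Hw1).
  apply Rmult_lt_compat_l with (r := Cmod l + 2) in Hw2; [|lra].
  field_simplify in Hw2; [|lra]. pose proof (Cmod_ge_0 (w - z)). nra.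
Qed.

Lemma has_cderiv_mult g1 g2 z l1 l2 : has_cderiv g1 z l1 -> has_cderiv g2 z l2 ->
  has_cderiv (fun w => g1 w * g2 w)%C z (l1 * g2 z + g1 z * l2)%C.
Proof.
  intros H1 H2 eps He.
  set (K := Cmod (g1 z) + Cmod (g2 z) + Cmod l1 + 2).
  pose proof (Cmod_ge_0 (g1 z)). pose proof (Cmod_ge_0 (g2 z)). pose proof (Cmod_ge_0 l1).
  set (e := Rmin 1 (eps / K)).
  assert (He0 : 0 < e) by (apply Rmin_pos; [lra| apply Rdiv_lt_0_compat; unfold K; lra]).
  assert (He1 : e <= 1) by apply Rmin_l.
  assert (HeK : e * K <= eps).
  { assert (HeK : e <= eps / K) by apply Rmin_r.
    apply Rmult_le_compat_r with (r := K) in HeK; [|unfold K; lra].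
    field_simplify in HeK; unfold K in *; lra. }
  destruct (H1 e He0) as [d1 [Hd1 P1]].
  destruct (H2 e He0) as [d2 [Hd2 P2]].
  destruct (has_cderiv_cont g2 z l2 H2 e He0) as [d3 [Hd3 P3]].
  exists (Rmin d1 (Rmin d2 d3)). split. repeat apply Rmin_pos; auto.
  intros w Hw.
  assert (Hw1 : Cmod (w - z) < d1) by (eapply Rlt_le_trans; [exact Hw|apply Rmin_l]).
  assert (Hw2 : Cmod (w - z) < d2)
    by (eapply Rlt_le_trans; [exact Hw|eapply Rle_trans; [apply Rmin_r|apply Rmin_l]]).
  assert (Hw3 : Cmod (w - z) < d3)
    by (eapply Rlt_le_trans; [exact Hw|eapply Rle_trans; [apply Rmin_r|apply Rmin_r]]).
  specialize (P1 w Hw1). specialize (P2 w Hw2). specialize (P3 w Hw3).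
  replace (g1 w * g2 w - g1 z * g2 z - (l1 * g2 z + g1 z * l2) * (w - z))%C with
    ((g1 w - g1 z - l1 * (w - z)) * g2 w + g1 z * (g2 w - g2 z - l2 * (w - z))
      + l1 * (w - z) * (g2 w - g2 z))%C by ring.
  eapply Rle_trans. apply Cmod_triangle.
  eapply Rle_trans. apply Rplus_le_compat_r. apply Cmod_triangle.
  rewrite !Cmod_mult.
  assert (Hg2w : Cmod (g2 w) <= Cmod (g2 z) + 1).
  { replace (g2 w) with ((g2 w - g2 z) + g2 z)%C by ring.
    eapply Rle_trans. apply Cmod_triangle. lra. }
  pose proof (Cmod_ge_0 (w - z)). pose proof (Cmod_ge_0 (g2 w)).
  pose proof (Cmod_ge_0 (g1 w - g1 z - l1 * (w - z))%C).
  pose proof (Cmod_ge_0 (g2 w - g2 z)%C).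
  assert (Cmod (g1 w - g1 z - l1 * (w - z)) * Cmod (g2 w) <= e * Cmod (w - z) * (Cmod (g2 z) + 1))
    by (apply Rmult_le_compat; lra).
  assert (Cmod (g1 z) * Cmod (g2 w - g2 z - l2 * (w - z)) <= Cmod (g1 z) * (e * Cmod (w - z)))
    by (apply Rmult_le_compat_l; lra).
  assert (Cmod l1 * Cmod (w - z) * Cmod (g2 w - g2 z) <= Cmod l1 * Cmod (w - z) * e)
    by (apply Rmult_le_compat_l; [nra|lra]).
  assert (e * Cmod (w - z) * K <= eps * Cmod (w - z)) by nra.
  unfold K in *. nra.
Qed.

Lemma has_cderiv_comp (g q : C -> C) z l m :
  has_cderiv q z l -> has_cderiv g (q z) m -> has_cderiv (fun w => g (q w)) z (m * l)%C.
Proof.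
  intros Hq Hg eps He.
  set (L := Cmod l + 1). set (M := Cmod m).
  assert (HL : 1 <= L) by (unfold L; pose proof (Cmod_ge_0 l); lra).
  assert (HM : 0 <= M) by apply Cmod_ge_0.
  destruct (Hg (eps / (2 * L))) as [dg [Hdg Pg]]; [apply Rdiv_lt_0_compat; lra|].
  destruct (Hq (eps / (2 * (M + 1)))) as [d1 [Hd1 P1]]; [apply Rdiv_lt_0_compat; lra|].
  destruct (has_cderiv_lip q z l Hq) as [d2 [Hd2 P2]].
  exists (Rmin d1 (Rmin d2 (dg / L))). split.
  { repeat apply Rmin_pos; auto. apply Rdiv_lt_0_compat; lra. }
  intros w Hw.
  assert (Hw1 : Cmod (w - z) < d1) by (eapply Rlt_le_trans; [exact Hw|apply Rmin_l]).
  assert (Hw2 : Cmod (w - z) < d2)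
    by (eapply Rlt_le_trans; [exact Hw|eapply Rle_trans; [apply Rmin_r|apply Rmin_l]]).
  assert (Hw3 : Cmod (w - z) < dg / L)
    by (eapply Rlt_le_trans; [exact Hw|eapply Rle_trans; [apply Rmin_r|apply Rmin_r]]).
  specialize (P1 w Hw1). specialize (P2 w Hw2). fold L in P2.
  pose proof (Cmod_ge_0 (w - z)) as Hwz.
  assert (Hqw : Cmod (q w - q z) < dg).
  { apply Rmult_lt_compat_l with (r := L) in Hw3; [|lra].
    field_simplify in Hw3; lra. }
  specialize (Pg (q w) Hqw).
  replace (g (q w) - g (q z) - m * l * (w - z))%C with
    ((g (q w) - g (q z) - m * (q w - q z)) + m * (q w - q z - l * (w - z)))%C by ring.
  eapply Rle_trans. apply Cmod_triangle. rewrite Cmod_mult. fold M.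
  assert (B1 : eps / (2 * L) * Cmod (q w - q z) <= eps / 2 * Cmod (w - z)).
  { replace (eps / 2 * Cmod (w - z)) with (eps / (2 * L) * (L * Cmod (w - z))) by (field; lra).
    apply Rmult_le_compat_l; [apply Rlt_le, Rdiv_lt_0_compat; lra | exact P2]. }
  assert (B2 : M * Cmod (q w - q z - l * (w - z)) <= eps / 2 * Cmod (w - z)).
  { eapply Rle_trans. apply Rmult_le_compat_l. exact HM. exact P1.
    replace (eps / 2 * Cmod (w - z)) with ((M + 1) * (eps / (2 * (M + 1)) * Cmod (w - z)))
      by (field; lra).
    apply Rmult_le_compat_r; [|lra]. apply Rmult_le_pos; [apply Rlt_le, Rdiv_lt_0_compat|]; lra. }
  lra.
Qed.

Lemma has_cderiv_cexp z : has_cderiv cexp z (cexp z).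
Proof.
  intros eps He.
  set (E := Cmod (cexp z)). assert (HE : 0 <= E) by apply Cmod_ge_0.
  exists (Rmin 1 (eps / (12 * (E + 1)))). split.
  { apply Rmin_pos; [lra | apply Rdiv_lt_0_compat; lra]. }
  intros w Hw. set (h := (w - z)%C) in *.
  assert (Hh1 : Cmod h <= 1) by (apply Rlt_le; eapply Rlt_le_trans; [exact Hw|apply Rmin_l]).
  assert (Hh2 : 12 * (E + 1) * Cmod h <= eps).
  { assert (Cmod h < eps / (12 * (E + 1))) by (eapply Rlt_le_trans; [exact Hw|apply Rmin_r]).
    apply Rmult_lt_compat_l with (r := 12 * (E + 1)) in H; [|lra].
    field_simplify in H; lra. }
  replace (cexp w - cexp z - cexp z * h)%C with (cexp z * (cexp h - 1 - h))%C.
  2:{ replace w with (z + h)%C by (unfold h; ring). rewrite cexp_add. ring. }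
  rewrite Cmod_mult. fold E. pose proof (Cmod_ge_0 h).
  assert (Hq : Cmod (cexp h - 1 - h) <= 12 * Cmod h * Cmod h).
  { eapply Rle_trans. apply cexp_taylor1_bound.
    assert (exp (Cmod h) <= 3) by (eapply Rle_trans; [apply exp_le; exact Hh1| apply exp_le_3]).
    pose proof (exp_pos (Cmod h)). simpl. nra. }
  pose proof (Cmod_ge_0 (cexp h - 1 - h)). nra.
Qed.

Lemma has_cderiv_sq (c u z : C) :
  has_cderiv (fun w => c * ((w - u) * (w - u)))%C z (2 * c * (z - u))%C.
Proof.
  intros eps He. exists (eps / (Cmod c + 1)). split.
  apply Rdiv_lt_0_compat; [lra| pose proof (Cmod_ge_0 c); lra].
  intros w Hw.
  replace (c * ((w - u) * (w - u)) - c * ((z - u) * (z - u)) - 2 * c * (z - u) * (w - z))%C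
    with (c * ((w - z) * (w - z)))%C by ring.
  rewrite !Cmod_mult. pose proof (Cmod_ge_0 c). pose proof (Cmod_ge_0 (w - z)).
  apply Rmult_lt_compat_l with (r := Cmod c + 1) in Hw; [|lra].
  field_simplify in Hw; [|lra]. nra.
Qed.

Definition gauss_factor (q : C) (c : R) (z : C) : C := cexp (q * ((z - RtoC c) * (z - RtoC c)))%C.

Lemma Cmod_gauss_factor q c z : Cmod (gauss_factor q c z) =
  exp (fst q * ((fst z - c)^2 - (snd z)^2) - snd q * (2 * (fst z - c) * snd z)).
Proof. unfold gauss_factor. rewrite Cmod_cexp. f_equal. destruct q, z; simpl. ring. Qed.

Lemma has_cderiv_gauss_factor q c z : exists l, has_cderiv (gauss_factor q c) z l.
Proof.
  eexists. apply (has_cderiv_comp cexp (fun w => q * ((w - RtoC c) * (w - RtoC c)))%C).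
  apply has_cderiv_sq. apply has_cderiv_cexp.
Qed.

Lemma has_cderiv_gauss_mult (D : C -> Prop) q c g :
  (forall z, D z -> exists l, has_cderiv g z l) ->
  forall z, D z -> exists l, has_cderiv (fun w => gauss_factor q c w * g w)%C z l.
Proof.
  intros Hg z Hz. destruct (Hg z Hz) as [l Hl]. destruct (has_cderiv_gauss_factor q c z) as [m Hm].
  eexists. exact (has_cderiv_mult _ _ z m l Hm Hl).
Qed.

Lemma lip_of_deriv (f df : R -> R) x y :
  (forall c, derivable_pt_lim f c (df c)) -> (forall c, Rabs (df c) <= 1) ->
  Rabs (f x - f y) <= Rabs (x - y).
Proof.
  intros Hd Hb. destruct (Rtotal_order x y) as [H|[H|H]].
  - destruct (MVT_cor2 f df x y H (fun c _ => Hd c)) as [c [E _]].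
    replace (f x - f y) with (- (f y - f x)) by ring. rewrite Rabs_Ropp, E.
    rewrite Rabs_mult. replace (x - y) with (- (y - x)) by ring. rewrite Rabs_Ropp.
    pose proof (Hb c). pose proof (Rabs_pos (y - x)). nra.
  - subst. replace (f y - f y) with 0 by ring. rewrite Rabs_R0. apply Rabs_pos.
  - destruct (MVT_cor2 f df y x H (fun c _ => Hd c)) as [c [E _]].
    rewrite E, Rabs_mult. pose proof (Hb c). pose proof (Rabs_pos (x - y)). nra.
Qed.

Lemma cos_lip x y : Rabs (cos x - cos y) <= Rabs (x - y).
Proof.
  apply (lip_of_deriv cos (fun c => - sin c)). intros c. apply derivable_pt_lim_cos.
  intros c. rewrite Rabs_Ropp. apply Rabs_le. apply SIN_bound.
Qed.

Lemma sin_lip x y : Rabs (sin x - sin y) <= Rabs (x - y).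
Proof.
  apply (lip_of_deriv sin cos). intros c. apply derivable_pt_lim_sin.
  intros c. apply Rabs_le. apply COS_bound.
Qed.

Definition polar (r t : R) : C := (RtoC r * eit t)%C.

Definition polar_dt (r t : R) : C := ((0, r) * eit t)%C.

Lemma polar_eq r t : polar r t = (r * cos t, r * sin t).
Proof. unfold polar, eit, cexp, RtoC, Cmult; simpl. rewrite exp_0. f_equal; ring. Qed.

Lemma polar_0 r : polar r 0 = RtoC r.
Proof. rewrite polar_eq, cos_0, sin_0. unfold RtoC. f_equal; ring. Qed.

Lemma Cmod_polar r t : 0 <= r -> Cmod (polar r t) = r.
Proof. intros H. unfold polar. rewrite Cmod_mult, Cmod_R, Rabs_right by lra. rewrite Cmod_eit. ring. Qed.

Lemma Cmod_polar_dt r t : Cmod (polar_dt r t) = Rabs r.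
Proof.
  unfold polar_dt. rewrite Cmod_mult, Cmod_eit, Rmult_1_r.
  unfold Cmod; simpl. rewrite Rmult_0_l, Rplus_0_l, Rmult_1_r. apply sqrt_Rsqr_abs.
Qed.

Lemma polar_sector al r t : 0 <= r -> 0 <= t <= al -> sector al (polar r t).
Proof. intros H1 H2. exists r, t. repeat split; auto; lra. Qed.

Lemma polar_lip r t r' t' :
  Cmod (polar r t - polar r' t') <= Rabs (r - r') + 2 * Rabs r' * Rabs (t - t').
Proof.
  replace (polar r t - polar r' t')%C with
    (RtoC (r - r') * eit t + RtoC r' * (eit t - eit t'))%C.
  2:{ unfold polar. rewrite RtoC_minus. ring. }
  eapply Rle_trans. apply Cmod_triangle. rewrite !Cmod_mult, !Cmod_R, Cmod_eit.
  apply Rplus_le_compat. lra.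
  replace (2 * Rabs r' * Rabs (t - t')) with (Rabs r' * (2 * Rabs (t - t'))) by ring.
  apply Rmult_le_compat_l. apply Rabs_pos.
  eapply Rle_trans. apply Cmod_le_sum. unfold eit, cexp; simpl. rewrite exp_0, !Rmult_1_l.
  replace (cos t + - cos t') with (cos t - cos t') by ring.
  replace (sin t + - sin t') with (sin t - sin t') by ring.
  pose proof (cos_lip t t'). pose proof (sin_lip t t'). lra.
Qed.

Lemma Rmax0_lip a b : Rabs (Rmax 0 a - Rmax 0 b) <= Rabs (a - b).
Proof.
  unfold Rmax; repeat destruct Rle_dec; apply Rabs_le; split;
    try apply Rabs_le in H; unfold Rabs; destruct Rcase_abs; lra.
Qed.

Lemma Rmin_lip c a b : Rabs (Rmin c a - Rmin c b) <= Rabs (a - b).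
Proof. unfold Rmin; repeat destruct Rle_dec; apply Rabs_le; split; unfold Rabs; destruct Rcase_abs; lra. Qed.

Lemma Rmax0_id r : 0 <= r -> Rmax 0 r = r.
Proof. intros H. unfold Rmax; destruct Rle_dec; lra. Qed.

Definition clamp_angle (al t : R) := Rmax 0 (Rmin al t).

Lemma clamp_angle_lip al a b : Rabs (clamp_angle al a - clamp_angle al b) <= Rabs (a - b).
Proof. unfold clamp_angle. eapply Rle_trans. apply Rmax0_lip. apply Rmin_lip. Qed.

Lemma clamp_angle_range al t : 0 <= al -> 0 <= clamp_angle al t <= al.
Proof. intros H. unfold clamp_angle, Rmax, Rmin; repeat destruct Rle_dec; lra. Qed.

Lemma clamp_angle_id al t : 0 <= t <= al -> clamp_angle al t = t.
Proof. intros H. unfold clamp_angle, Rmax, Rmin; repeat destruct Rle_dec; lra. Qed.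

(** [g] in polar coordinates, extended to all (r, t) by clamping onto the
    sector; this makes every restriction to a line continuous on all of R. *)
Definition clamped (g : C -> C) (al r t : R) : C := g (polar (Rmax 0 r) (clamp_angle al t)).

Lemma clamped_id g al r t : 0 <= r -> 0 <= t <= al -> clamped g al r t = g (polar r t).
Proof. intros Hr Ht. unfold clamped. rewrite Rmax0_id, clamp_angle_id by lra. reflexivity. Qed.

Section Clamped.
Variables (g : C -> C) (al : R).
Hypothesis Hal : 0 <= al.
Hypothesis Hcont : forall r t, 0 <= r -> 0 <= t <= al -> ccont_pt g (polar r t).

Lemma clamped_cont_r t x : cont_pt (fun r => clamped g al r t) x.
Proof.
  intros eps He.
  destruct (Hcont (Rmax 0 x) (clamp_angle al t) (Rmax_l _ _) (clamp_angle_range al t Hal) eps He)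
    as [d [Hd P]].
  exists d. split; auto. intros y Hy. unfold clamped. apply P.
  eapply Rle_lt_trans. apply polar_lip. rewrite Rminus_diag, Rabs_R0, Rmult_0_r, Rplus_0_r.
  eapply Rle_lt_trans. apply Rmax0_lip. exact Hy.
Qed.

Lemma clamped_cont_t r x : cont_pt (fun t => clamped g al r t) x.
Proof.
  intros eps He.
  destruct (Hcont (Rmax 0 r) (clamp_angle al x) (Rmax_l _ _) (clamp_angle_range al x Hal) eps He)
    as [d [Hd P]].
  set (m := Rabs (Rmax 0 r)). assert (Hm : 0 <= m) by apply Rabs_pos.
  exists (d / (2 * m + 1)). split. apply Rdiv_lt_0_compat; lra.
  intros y Hy. unfold clamped. apply P.
  eapply Rle_lt_trans. apply polar_lip. rewrite Rminus_diag, Rabs_R0, Rplus_0_l. fold m.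
  pose proof (clamp_angle_lip al y x).
  apply Rmult_lt_compat_l with (r := 2 * m + 1) in Hy; [|lra].
  field_simplify in Hy; [|lra].
  pose proof (Rabs_pos (y - x)). pose proof (Rabs_pos (clamp_angle al y - clamp_angle al x)). nra.
Qed.

Lemma ray_ex_RInt t u v : 0 <= t <= al -> 0 <= u -> 0 <= v ->
  @ex_RInt C_R_CompleteNormedModule (fun r => g (polar r t)) u v.
Proof.
  intros Ht Hu Hv. apply (ex_RInt_ext (V := C_R_CompleteNormedModule) (fun r => clamped g al r t)).
  - intros x Hx. apply clamped_id; [|lra].
    pose proof (Rmin_glb u v 0). unfold Rmin in *; destruct Rle_dec; lra.
  - apply ex_RInt_cont_pt. intros; apply clamped_cont_r.
Qed.

Lemma ray_ex_RInt_Cmod t u v : 0 <= t <= al -> 0 <= u -> 0 <= v ->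
  ex_RInt (fun r => Cmod (g (polar r t))) u v.
Proof.
  intros Ht Hu Hv. apply (ex_RInt_ext (V := R_CompleteNormedModule) (fun r => Cmod (clamped g al r t))).
  - intros x Hx. rewrite clamped_id; [reflexivity| |lra].
    pose proof (Rmin_glb u v 0). unfold Rmin in *; destruct Rle_dec; lra.
  - apply ex_RInt_Cmod. intros; apply clamped_cont_r.
Qed.

Lemma arc_ex_RInt R0 : 0 <= R0 ->
  @ex_RInt C_R_CompleteNormedModule (fun t => g (polar R0 t) * polar_dt R0 t)%C 0 al.
Proof.
  intros HR.
  apply (ex_RInt_ext (V := C_R_CompleteNormedModule) (fun t => clamped g al R0 t * polar_dt R0 t)%C).
  - intros x Hx. rewrite Rmin_left, Rmax_right in Hx by lra. rewrite clamped_id by lra. reflexivity.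
  - apply ex_RInt_cont_pt. intros z _. apply cont_pt_mult. apply clamped_cont_t.
    apply cont_pt_of_derive; unfold polar_dt, eit, cexp, Cmult; simpl; auto_derive; auto.
Qed.

End Clamped.

(** ** Goursat's lemma on polar rectangles *)

Lemma ftc_pair (u v du dv : R -> R) a b :
  (forall s, is_derive u s (du s)) -> (forall s, is_derive v s (dv s)) ->
  (forall s, ex_derive du s) -> (forall s, ex_derive dv s) ->
  @is_RInt C_R_NormedModule (fun s => (du s, dv s)) a b ((u b - u a, v b - v a)).
Proof.
  intros Hu Hv Hdu Hdv.
  apply (is_RInt_fct_extend_pair (U := R_NormedModule) (V := R_NormedModule)); simpl.
  - apply (is_RInt_derive (V := R_CompleteNormedModule) u du). intros; auto.
    intros x _; apply (ex_derive_continuous (K:=R_AbsRing) (V:=R_NormedModule)); auto.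
  - apply (is_RInt_derive (V := R_CompleteNormedModule) v dv). intros; auto.
    intros x _; apply (ex_derive_continuous (K:=R_AbsRing) (V:=R_NormedModule)); auto.
Qed.

Lemma ftc_C (P A : R -> C) a b :
  (forall s, is_derive (fun x => fst (P x)) s (fst (A s))) ->
  (forall s, is_derive (fun x => snd (P x)) s (snd (A s))) ->
  (forall s, ex_derive (fun x => fst (A x)) s) ->
  (forall s, ex_derive (fun x => snd (A x)) s) ->
  @is_RInt C_R_NormedModule A a b (P b - P a)%C.
Proof.
  intros H1 H2 H3 H4.
  pose proof (ftc_pair (fun x => fst (P x)) (fun x => snd (P x))
                (fun x => fst (A x)) (fun x => snd (A x)) a b H1 H2 H3 H4) as H.
  eapply is_RInt_ext. 2:{ replace (P b - P a)%C with ((fst (P b) - fst (P a), snd (P b) - snd (P a))).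
    exact H. destruct (P b), (P a); unfold Cminus, Cplus, Copp; simpl; f_equal; ring. }
  intros x _. simpl. destruct (A x); reflexivity.
Qed.

Definition affine (c0 l w : C) : C := (c0 + l * w)%C.
Definition affine_prim (c0 l w : C) : C := (c0 * w + ((/2)%R, 0%R) * l * (w * w))%C.

Lemma affine_radial (c0 l : C) t a b :
  @is_RInt C_R_NormedModule (fun r => affine c0 l (polar r t) * eit t)%C a b
    (affine_prim c0 l (polar b t) - affine_prim c0 l (polar a t))%C.
Proof.
  destruct c0 as [p q], l as [m n].
  apply (ftc_C (fun r => affine_prim (p,q) (m,n) (polar r t))); intros s;
  unfold affine_prim, affine, eit, polar, cexp, RtoC, Cmult, Cplus; simpl; auto_derive; auto; field.
Qed.

Lemma affine_angular (c0 l : C) r a b :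
  @is_RInt C_R_NormedModule (fun t => affine c0 l (polar r t) * polar_dt r t)%C a b
    (affine_prim c0 l (polar r b) - affine_prim c0 l (polar r a))%C.
Proof.
  destruct c0 as [p q], l as [m n].
  apply (ftc_C (fun t => affine_prim (p,q) (m,n) (polar r t))); intros s;
  unfold affine_prim, affine, polar_dt, eit, polar, cexp, RtoC, Cmult, Cplus; simpl;
  auto_derive; auto; field.
Qed.

Lemma nested_intervals (lo hi : nat -> R) :
  (forall n, lo n <= lo (S n)) -> (forall n, hi (S n) <= hi n) -> (forall n, lo n <= hi n) ->
  exists x, forall n, lo n <= x <= hi n.
Proof.
  intros Hl Hh Hlh.
  assert (Hhd : forall n, hi n <= hi 0%nat).
  { induction n. lra. specialize (Hh n). lra. }
  assert (Hhd' : forall n m, (n <= m)%nat -> hi m <= hi n).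
  { intros n m Hnm. induction Hnm. lra. specialize (Hh m). lra. }
  destruct (growing_cv lo Hl) as [x Hx].
  { exists (hi 0%nat). intros y [n ->]. specialize (Hlh n). specialize (Hhd n). lra. }
  exists x. intros n. split. apply (growing_ineq lo x Hl Hx).
  destruct (Rle_dec x (hi n)) as [H|H]; auto. exfalso.
  destruct (Hx (x - hi n)) as [N HN]. lra.
  specialize (HN (Nat.max N n) (Nat.le_max_l _ _)).
  pose proof (Hlh (Nat.max N n)). pose proof (Hhd' n (Nat.max N n) (Nat.le_max_r _ _)).
  unfold Rdist in HN. apply Rabs_def2 in HN. lra.
Qed.

Lemma half_pow_small D delta : 0 <= D -> 0 < delta -> exists N, D * (/2)^N < delta.
Proof.
  intros HD Hdelta.
  destruct (pow_lt_1_zero (/2) ltac:(rewrite Rabs_right; lra) (delta / (D + 1))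
              ltac:(apply Rdiv_lt_0_compat; lra)) as [N HN].
  exists N. specialize (HN N (le_n N)).
  assert (0 < (/2)^N) by (apply pow_lt; lra).
  rewrite Rabs_right in HN by lra.
  apply Rmult_lt_compat_l with (r := D + 1) in HN; [|lra]. field_simplify in HN; nra.
Qed.

Record rect := Rect { r1 : R; r2 : R; t1 : R; t2 : R }.

Definition in_rect (Q : rect) (r t : R) : Prop := r1 Q <= r <= r2 Q /\ t1 Q <= t <= t2 Q.

Definition quarter1 Q := Rect (r1 Q) ((r1 Q + r2 Q)/2) (t1 Q) ((t1 Q + t2 Q)/2).
Definition quarter2 Q := Rect ((r1 Q + r2 Q)/2) (r2 Q) (t1 Q) ((t1 Q + t2 Q)/2).
Definition quarter3 Q := Rect (r1 Q) ((r1 Q + r2 Q)/2) ((t1 Q + t2 Q)/2) (t2 Q).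
Definition quarter4 Q := Rect ((r1 Q + r2 Q)/2) (r2 Q) ((t1 Q + t2 Q)/2) (t2 Q).

Section Goursat.
Variables (g : C -> C) (al : R).
Hypothesis Hal : 0 <= al.
Hypothesis Hdiff : forall r t, 0 <= r -> 0 <= t <= al -> exists l, has_cderiv g (polar r t) l.

Lemma g_cont r t : 0 <= r -> 0 <= t <= al -> ccont_pt g (polar r t).
Proof. intros H1 H2. destruct (Hdiff r t H1 H2) as [l Hl]. eapply has_cderiv_cont; eauto. Qed.

(** The contour integral of [g dz] along the sides of a polar rectangle:
    on a radial side dz = e^{it} dr, on an angular side dz = i r e^{it} dt. *)
Definition radial_integrand (t r : R) : C := (clamped g al r t * eit t)%C.
Definition angular_integrand (r t : R) : C := (clamped g al r t * polar_dt r t)%C.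

Lemma radial_ex t a b : @ex_RInt C_R_CompleteNormedModule (radial_integrand t) a b.
Proof.
  apply ex_RInt_cont_pt. intros; apply cont_pt_mult.
  apply clamped_cont_r; auto using g_cont. apply cont_pt_const.
Qed.

Lemma angular_ex r a b : @ex_RInt C_R_CompleteNormedModule (angular_integrand r) a b.
Proof.
  apply ex_RInt_cont_pt. intros; apply cont_pt_mult.
  apply clamped_cont_t; auto using g_cont.
  apply cont_pt_of_derive; unfold polar_dt, eit, cexp, Cmult; simpl; auto_derive; auto.
Qed.

Definition radial_int t a b : C := @RInt C_R_CompleteNormedModule (radial_integrand t) a b.
Definition angular_int r a b : C := @RInt C_R_CompleteNormedModule (angular_integrand r) a b.

Definition boundary_int (Q : rect) : C :=
  (radial_int (t1 Q) (r1 Q) (r2 Q) + angular_int (r2 Q) (t1 Q) (t2 Q)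
   - radial_int (t2 Q) (r1 Q) (r2 Q) - angular_int (r1 Q) (t1 Q) (t2 Q))%C.

(** The boundary integral is additive under quadrisection: interior sides cancel. *)
Lemma boundary_int_split Q : boundary_int Q =
  (boundary_int (quarter1 Q) + boundary_int (quarter2 Q)
   + boundary_int (quarter3 Q) + boundary_int (quarter4 Q))%C.
Proof.
  assert (Hr : forall t a b c, (radial_int t a b + radial_int t b c)%C = radial_int t a c)
    by (intros; apply (RInt_Chasles (V := C_R_CompleteNormedModule)); apply radial_ex).
  assert (Ha : forall r a b c, (angular_int r a b + angular_int r b c)%C = angular_int r a c)
    by (intros; apply (RInt_Chasles (V := C_R_CompleteNormedModule)); apply angular_ex).
  destruct Q as [a b c d]. unfold boundary_int, quarter1, quarter2, quarter3, quarter4; simpl.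
  rewrite <- (Hr c a ((a + b) / 2) b), <- (Hr d a ((a + b) / 2) b),
          <- (Ha b c ((c + d) / 2) d), <- (Ha a c ((c + d) / 2) d).
  ring.
Qed.

Definition select_quarter (Q : rect) : rect :=
  let n Q' := Cmod (boundary_int Q') in
  if Rle_dec (n Q / 4) (n (quarter1 Q)) then quarter1 Q else
  if Rle_dec (n Q / 4) (n (quarter2 Q)) then quarter2 Q else
  if Rle_dec (n Q / 4) (n (quarter3 Q)) then quarter3 Q else quarter4 Q.

(** By the split formula and the triangle inequality some quarter qualifies. *)
Lemma select_quarter_big Q : Cmod (boundary_int Q) / 4 <= Cmod (boundary_int (select_quarter Q)).
Proof.
  unfold select_quarter. destruct Rle_dec as [H|H]; auto.
  destruct Rle_dec as [H2|H2]; auto.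
  destruct Rle_dec as [H3|H3]; auto.
  rewrite (boundary_int_split Q) in *.
  repeat (eapply Rle_trans in H3; [| apply Rmult_le_compat_r; [lra | apply Cmod_triangle]]).
  pose proof (Cmod_triangle (boundary_int (quarter1 Q) + boundary_int (quarter2 Q)
                             + boundary_int (quarter3 Q)) (boundary_int (quarter4 Q))).
  pose proof (Cmod_triangle (boundary_int (quarter1 Q) + boundary_int (quarter2 Q))
                            (boundary_int (quarter3 Q))).
  pose proof (Cmod_triangle (boundary_int (quarter1 Q)) (boundary_int (quarter2 Q))).
  lra.
Qed.

Lemma select_quarter_geom Q : r1 Q <= r2 Q -> t1 Q <= t2 Q ->
  r1 Q <= r1 (select_quarter Q) /\ r2 (select_quarter Q) <= r2 Q /\
  r2 (select_quarter Q) - r1 (select_quarter Q) = (r2 Q - r1 Q) / 2 /\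
  t1 Q <= t1 (select_quarter Q) /\ t2 (select_quarter Q) <= t2 Q /\
  t2 (select_quarter Q) - t1 (select_quarter Q) = (t2 Q - t1 Q) / 2.
Proof.
  intros H1 H2. unfold select_quarter.
  repeat destruct Rle_dec; unfold quarter1, quarter2, quarter3, quarter4; simpl; repeat split; lra.
Qed.

Definition nested_rects (Q : rect) (n : nat) : rect := Nat.iter n select_quarter Q.

Lemma nested_rects_inv Q : r1 Q <= r2 Q -> t1 Q <= t2 Q -> forall n,
  r1 Q <= r1 (nested_rects Q n) /\ r1 (nested_rects Q n) <= r2 (nested_rects Q n) /\
  r2 (nested_rects Q n) <= r2 Q /\
  t1 Q <= t1 (nested_rects Q n) /\ t1 (nested_rects Q n) <= t2 (nested_rects Q n) /\
  t2 (nested_rects Q n) <= t2 Q /\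
  r2 (nested_rects Q n) - r1 (nested_rects Q n) = (r2 Q - r1 Q) * (/2)^n /\
  t2 (nested_rects Q n) - t1 (nested_rects Q n) = (t2 Q - t1 Q) * (/2)^n /\
  Cmod (boundary_int Q) * (/4)^n <= Cmod (boundary_int (nested_rects Q n)).
Proof.
  intros H1 H2. induction n.
  - simpl. lra.
  - destruct IHn as (A1 & A2 & A3 & A4 & A5 & A6 & A7 & A8 & A9).
    change (nested_rects Q (S n)) with (select_quarter (nested_rects Q n)).
    destruct (select_quarter_geom (nested_rects Q n) A2 A5) as (B1 & B2 & B3 & B4 & B5 & B6).
    pose proof (select_quarter_big (nested_rects Q n)).
    assert (0 < (/2)^n) by (apply pow_lt; lra).
    simpl. repeat split; try nra.
Qed.

Lemma nested_rects_point Q : r1 Q <= r2 Q -> t1 Q <= t2 Q ->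
  exists r0 t0, forall n, in_rect (nested_rects Q n) r0 t0.
Proof.
  intros H1 H2. pose proof (nested_rects_inv Q H1 H2) as Inv.
  assert (Mono : forall n, r1 (nested_rects Q n) <= r1 (nested_rects Q (S n)) /\
     r2 (nested_rects Q (S n)) <= r2 (nested_rects Q n) /\
     t1 (nested_rects Q n) <= t1 (nested_rects Q (S n)) /\
     t2 (nested_rects Q (S n)) <= t2 (nested_rects Q n)).
  { intros n. destruct (Inv n) as (A1 & A2 & A3 & A4 & A5 & _).
    change (nested_rects Q (S n)) with (select_quarter (nested_rects Q n)).
    destruct (select_quarter_geom (nested_rects Q n) A2 A5) as (B1 & B2 & B3 & B4 & B5 & B6). lra. }
  destruct (nested_intervals (fun n => r1 (nested_rects Q n)) (fun n => r2 (nested_rects Q n)))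
    as [r0 Hr0]; try (intros n; apply Mono); try (intros n; apply Inv).
  destruct (nested_intervals (fun n => t1 (nested_rects Q n)) (fun n => t2 (nested_rects Q n)))
    as [t0 Ht0]; try (intros n; apply Mono); try (intros n; apply Inv).
  exists r0, t0. intros n. split; auto.
Qed.

Section Remainders.
Variables c0 l : C.

Definition radial_rem t r : C := (radial_integrand t r - affine c0 l (polar r t) * eit t)%C.
Definition angular_rem r t : C := (angular_integrand r t - affine c0 l (polar r t) * polar_dt r t)%C.

Lemma radial_rem_ex t a b : @ex_RInt C_R_CompleteNormedModule (radial_rem t) a b.
Proof.
  apply (ex_RInt_minus (V := C_R_CompleteNormedModule)). apply radial_ex.
  eexists; apply affine_radial.
Qed.

Lemma angular_rem_ex r a b : @ex_RInt C_R_CompleteNormedModule (angular_rem r) a b.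
Proof.
  apply (ex_RInt_minus (V := C_R_CompleteNormedModule)). apply angular_ex.
  eexists; apply affine_angular.
Qed.

Lemma radial_int_dec t a b : radial_int t a b =
  (affine_prim c0 l (polar b t) - affine_prim c0 l (polar a t)
   + @RInt C_R_CompleteNormedModule (radial_rem t) a b)%C.
Proof.
  apply (is_RInt_unique (V := C_R_CompleteNormedModule)).
  eapply is_RInt_ext. 2:{ apply (is_RInt_plus (V := C_R_NormedModule)). apply affine_radial.
    apply (RInt_correct (V := C_R_CompleteNormedModule)). apply radial_rem_ex. }
  intros x _. unfold radial_rem. simpl. change plus with Cplus. ring.
Qed.

Lemma angular_int_dec r a b : angular_int r a b =
  (affine_prim c0 l (polar r b) - affine_prim c0 l (polar r a)
   + @RInt C_R_CompleteNormedModule (angular_rem r) a b)%C.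
Proof.
  apply (is_RInt_unique (V := C_R_CompleteNormedModule)).
  eapply is_RInt_ext. 2:{ apply (is_RInt_plus (V := C_R_NormedModule)). apply affine_angular.
    apply (RInt_correct (V := C_R_CompleteNormedModule)). apply angular_rem_ex. }
  intros x _. unfold angular_rem. simpl. change plus with Cplus. ring.
Qed.

(** Affine functions have a primitive, so only the remainders contribute to
    the boundary integral. *)
Lemma boundary_int_rem Q : boundary_int Q =
  (@RInt C_R_CompleteNormedModule (radial_rem (t1 Q)) (r1 Q) (r2 Q)
   + @RInt C_R_CompleteNormedModule (angular_rem (r2 Q)) (t1 Q) (t2 Q)
   - @RInt C_R_CompleteNormedModule (radial_rem (t2 Q)) (r1 Q) (r2 Q)
   - @RInt C_R_CompleteNormedModule (angular_rem (r1 Q)) (t1 Q) (t2 Q))%C.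
Proof. unfold boundary_int. rewrite !radial_int_dec, !angular_int_dec. ring. Qed.

Lemma boundary_int_local_bound Q M :
  0 <= r1 Q <= r2 Q -> 0 <= t1 Q <= t2 Q -> t2 Q <= al ->
  (forall r t, in_rect Q r t -> Cmod (g (polar r t) - affine c0 l (polar r t)) <= M) ->
  Cmod (boundary_int Q) <= 2 * ((r2 Q - r1 Q) + r2 Q * (t2 Q - t1 Q)) * M.
Proof.
  intros HQr HQt HQa HM.
  assert (HM0 : 0 <= M).
  { eapply Rle_trans; [apply Cmod_ge_0 | apply (HM (r1 Q) (t1 Q))]. split; lra. }
  assert (B1 : forall t, t1 Q <= t <= t2 Q ->
    Cmod (@RInt C_R_CompleteNormedModule (radial_rem t) (r1 Q) (r2 Q)) <= (r2 Q - r1 Q) * M).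
  { intros t Ht. apply RInt_Cmod_le_const. lra. apply radial_rem_ex. intros r Hr.
    unfold radial_rem, radial_integrand. rewrite clamped_id by lra.
    replace (g (polar r t) * eit t - affine c0 l (polar r t) * eit t)%C
      with ((g (polar r t) - affine c0 l (polar r t)) * eit t)%C by ring.
    rewrite Cmod_mult, Cmod_eit, Rmult_1_r. apply HM. split; lra. }
  assert (B2 : forall r, r1 Q <= r <= r2 Q ->
    Cmod (@RInt C_R_CompleteNormedModule (angular_rem r) (t1 Q) (t2 Q)) <= (t2 Q - t1 Q) * (M * r2 Q)).
  { intros r Hr. apply RInt_Cmod_le_const. lra. apply angular_rem_ex. intros t Ht.
    unfold angular_rem, angular_integrand. rewrite clamped_id by lra.
    replace (g (polar r t) * polar_dt r t - affine c0 l (polar r t) * polar_dt r t)%C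
      with ((g (polar r t) - affine c0 l (polar r t)) * polar_dt r t)%C by ring.
    rewrite Cmod_mult, Cmod_polar_dt, Rabs_right by lra.
    apply Rmult_le_compat; try lra. apply Cmod_ge_0. apply HM. split; lra. }
  rewrite boundary_int_rem.
  pose proof (B1 (t1 Q) ltac:(lra)). pose proof (B1 (t2 Q) ltac:(lra)).
  pose proof (B2 (r1 Q) ltac:(lra)). pose proof (B2 (r2 Q) ltac:(lra)).
  unfold Cminus.
  eapply Rle_trans. apply Cmod_triangle. rewrite Cmod_opp.
  eapply Rle_trans. apply Rplus_le_compat_r. apply Cmod_triangle. rewrite Cmod_opp.
  eapply Rle_trans. apply Rplus_le_compat_r. apply Rplus_le_compat_r. apply Cmod_triangle.
  nra.
Qed.

End Remainders.

Lemma nested_rects_near Q n r0 t0 : 0 <= r1 Q <= r2 Q -> t1 Q <= t2 Q ->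
  in_rect (nested_rects Q n) r0 t0 -> forall r t, in_rect (nested_rects Q n) r t ->
  Cmod (polar r t - polar r0 t0) <= ((r2 Q - r1 Q) + 2 * r2 Q * (t2 Q - t1 Q)) * (/2)^n.
Proof.
  intros HQr HQt [Hr0 Ht0] r t [Hr Ht].
  destruct (nested_rects_inv Q ltac:(lra) HQt n) as (A1 & A2 & A3 & A4 & A5 & A6 & A7 & A8 & _).
  eapply Rle_trans. apply polar_lip. rewrite (Rabs_right r0) by lra.
  assert (Rabs (r - r0) <= (r2 Q - r1 Q) * (/2)^n) by (apply Rabs_le; lra).
  assert (Rabs (t - t0) <= (t2 Q - t1 Q) * (/2)^n) by (apply Rabs_le; lra).
  assert (0 < (/2)^n) by (apply pow_lt; lra).
  assert (2 * r0 * Rabs (t - t0) <= 2 * r2 Q * ((t2 Q - t1 Q) * (/2)^n))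
    by (pose proof (Rabs_pos (t - t0)); nra).
  nra.
Qed.

(** If not, the nested quarters keep a fixed fraction
    4^-n of it, while near their common point [g] is affine up to o(2^-n) on
    a boundary of length O(2^-n). *)
Theorem goursat Q : 0 <= r1 Q <= r2 Q -> 0 <= t1 Q <= t2 Q -> t2 Q <= al -> boundary_int Q = 0%C.
Proof.
  intros HQr HQt HQa.
  destruct (Req_dec (Cmod (boundary_int Q)) 0) as [H0|H0]; [apply Cmod_eq_0; exact H0|].
  exfalso. set (eta := Cmod (boundary_int Q)).
  assert (Heta : 0 < eta) by (pose proof (Cmod_ge_0 (boundary_int Q)); unfold eta in *; lra).
  destruct (nested_rects_point Q ltac:(lra) ltac:(lra)) as [r0 [t0 Hpt]].
  assert (Hr0 : r1 Q <= r0 <= r2 Q /\ t1 Q <= t0 <= t2 Q) by (destruct (Hpt 0%nat); simpl in *; lra).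
  destruct (Hdiff r0 t0 ltac:(lra) ltac:(lra)) as [l Hl].
  set (w0 := polar r0 t0). set (c0 := (g w0 - l * w0)%C).
  set (Rm := r2 Q). set (dr := r2 Q - r1 Q). set (dt := t2 Q - t1 Q).
  set (D0 := dr + 2 * Rm * dt). assert (HD0 : 0 <= D0) by (unfold D0, dr, dt, Rm; nra).
  set (K := 2 * (dr + Rm * dt) * D0).
  assert (HK : 0 <= K) by (unfold K, dr, dt, Rm in *; apply Rmult_le_pos; nra).
  set (eps := eta / (2 * (K + 1))). assert (Heps : 0 < eps) by (apply Rdiv_lt_0_compat; lra).
  destruct (Hl eps Heps) as [delta [Hdelta Pd]]. fold w0 in Pd.
  destruct (half_pow_small D0 delta HD0 Hdelta) as [N HDh]. set (h := (/2)^N) in *.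
  assert (Hh : 0 < h) by (apply pow_lt; lra).
  set (Qn := nested_rects Q N).
  destruct (nested_rects_inv Q ltac:(lra) ltac:(lra) N)
    as (A1 & A2 & A3 & A4 & A5 & A6 & A7 & A8 & A9).
  fold Qn h dr dt in A1, A2, A3, A4, A5, A6, A7, A8, A9.
  assert (PB : forall r t, in_rect Qn r t ->
     Cmod (g (polar r t) - affine c0 l (polar r t)) <= eps * (D0 * h)).
  { intros r t Hrt.
    pose proof (nested_rects_near Q N r0 t0 ltac:(lra) ltac:(lra) (Hpt N) r t Hrt) as Hnear.
    change (Cmod (polar r t - w0) <= D0 * h) in Hnear.
    replace (g (polar r t) - affine c0 l (polar r t))%C
      with (g (polar r t) - g w0 - l * (polar r t - w0))%C by (unfold affine, c0; ring).
    eapply Rle_trans. apply Pd; lra. apply Rmult_le_compat_l; lra. }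
  pose proof (boundary_int_local_bound c0 l Qn _ ltac:(lra) ltac:(lra) ltac:(lra) PB) as Hup.
  assert (H4 : (/4)^N = h * h) by (unfold h; rewrite <- Rpow_mult_distr; f_equal; field).
  rewrite H4 in A9. fold eta in A9.
  assert (K * eps < eta).
  { unfold eps. apply Rmult_lt_reg_r with (r := 2 * (K + 1)). lra. field_simplify; [|lra]. nra. }
  assert (2 * (dr * h + r2 Qn * (dt * h)) * (eps * (D0 * h)) <= K * eps * (h * h)).
  { assert (r2 Qn * (dt * h) <= Rm * (dt * h)) by (unfold Rm; apply Rmult_le_compat_r; nra).
    assert (0 <= eps * (D0 * h)) by (apply Rmult_le_pos; [lra | apply Rmult_le_pos; lra]).
    replace (K * eps * (h * h)) with (2 * ((dr + Rm * dt) * h) * (eps * (D0 * h))) by (unfold K; ring).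
    apply Rmult_le_compat_r; lra. }
  assert (K * eps * (h * h) < eta * (h * h)) by (apply Rmult_lt_compat_r; nra).
  rewrite A7, A8 in Hup. lra.
Qed.

End Goursat.

(** ** Cauchy's theorem for the circular sector *)

Lemma is_RInt_Cmult_r (h : R -> C) (c : C) a b l :
  @is_RInt C_R_NormedModule h a b l ->
  @is_RInt C_R_NormedModule (fun x => h x * c)%C a b (l * c)%C.
Proof.
  intros H. destruct c as [cr ci].
  pose proof (is_RInt_fct_extend_fst (U := R_NormedModule) (V := R_NormedModule) h a b l H) as H1.
  pose proof (is_RInt_fct_extend_snd (U := R_NormedModule) (V := R_NormedModule) h a b l H) as H2.
  pose proof (is_RInt_scal (V := R_NormedModule) _ _ _ cr _ H1) as H1r.
  pose proof (is_RInt_scal (V := R_NormedModule) _ _ _ ci _ H1) as H1i.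
  pose proof (is_RInt_scal (V := R_NormedModule) _ _ _ cr _ H2) as H2r.
  pose proof (is_RInt_scal (V := R_NormedModule) _ _ _ ci _ H2) as H2i.
  pose proof (is_RInt_minus (V := R_NormedModule) _ _ _ _ _ _ H1r H2i) as E1.
  pose proof (is_RInt_plus (V := R_NormedModule) _ _ _ _ _ _ H1i H2r) as E2.
  replace (l * (cr, ci))%C with ((minus (scal cr (fst l)) (scal ci (snd l)) : R),
                                 (plus (scal ci (fst l)) (scal cr (snd l)) : R)).
  2:{ destruct l; unfold minus, plus, opp, scal; simpl; unfold mult; simpl; unfold Cmult; simpl;
      f_equal; ring. }
  eapply is_RInt_ext. 2:{ apply (is_RInt_fct_extend_pair (U := R_NormedModule) (V := R_NormedModule)
     (fun x => (minus (scal cr (fst (h x))) (scal ci (snd (h x))) : R,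
                plus (scal ci (fst (h x))) (scal cr (snd (h x))) : R))); simpl; [exact E1|exact E2]. }
  intros x _. simpl. destruct (h x); unfold minus, plus, opp, scal; simpl; unfold mult; simpl;
    unfold Cmult; simpl; f_equal; ring.
Qed.

Lemma RInt_Cmult_r (h : R -> C) (c : C) a b :
  @ex_RInt C_R_CompleteNormedModule h a b ->
  @RInt C_R_CompleteNormedModule (fun x => h x * c)%C a b = (@RInt C_R_CompleteNormedModule h a b * c)%C.
Proof.
  intros H. apply (is_RInt_unique (V := C_R_CompleteNormedModule)).
  apply is_RInt_Cmult_r. apply (RInt_correct (V := C_R_CompleteNormedModule)). exact H.
Qed.

(** This is Goursat's lemma for the rectangle [0, R0] x [0, al], whose side
    r = 0 contributes nothing. *)
Theorem cauchy_sector (g : C -> C) (al R0 : R) : 0 <= al -> 0 <= R0 ->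
  (forall r t, 0 <= r -> 0 <= t <= al -> exists l, has_cderiv g (polar r t) l) ->
  @RInt C_R_CompleteNormedModule (fun r => g (RtoC r)) 0 R0
  = (@RInt C_R_CompleteNormedModule (fun r => g (polar r al)) 0 R0 * eit al
     - @RInt C_R_CompleteNormedModule (fun t => g (polar R0 t) * polar_dt R0 t)%C 0 al)%C.
Proof.
  intros Hal HR Hdiff.
  pose proof (goursat g al Hal Hdiff (Rect 0 R0 0 al) ltac:(simpl; lra) ltac:(simpl; lra)
                ltac:(simpl; lra)) as G.
  unfold boundary_int, radial_int, angular_int in G; simpl in G.
  rewrite (RInt_ext (V := C_R_CompleteNormedModule) (radial_integrand g al 0) (fun r => g (RtoC r))) in G.
  2:{ intros x Hx. rewrite Rmin_left, Rmax_right in Hx by lra. unfold radial_integrand.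
      rewrite clamped_id by lra. rewrite polar_0, eit_0. apply Cmult_1_r. }
  rewrite (RInt_ext (V := C_R_CompleteNormedModule) (angular_integrand g al R0)
             (fun t => g (polar R0 t) * polar_dt R0 t)%C) in G.
  2:{ intros x Hx. rewrite Rmin_left, Rmax_right in Hx by lra. unfold angular_integrand.
      rewrite clamped_id by lra. reflexivity. }
  rewrite (RInt_ext (V := C_R_CompleteNormedModule) (radial_integrand g al al)
             (fun r => g (polar r al) * eit al)%C) in G.
  2:{ intros x Hx. rewrite Rmin_left, Rmax_right in Hx by lra. unfold radial_integrand.
      rewrite clamped_id by lra. reflexivity. }
  rewrite (RInt_ext (V := C_R_CompleteNormedModule) (angular_integrand g al 0) (fun _ => RtoC 0)) in G.
  2:{ intros x _. unfold angular_integrand, polar_dt.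
      change ((0, 0) : C) with (RtoC 0). rewrite Cmult_0_l, Cmult_0_r. reflexivity. }
  rewrite RInt_const, RInt_Cmult_r in G.
  2:{ apply (ray_ex_RInt g al); [| |lra|lra|lra]; auto. intros; apply (g_cont g al); auto. }
  change (scal (al - 0) (RtoC 0)) with (@scal R_Ring C_R_NormedModule (al - 0) (RtoC 0)) in G.
  rewrite (scal_zero_r (V := C_R_NormedModule)) in G.
  lazymatch goal with |- ?x = ?y => change (@eq C x y) end.
  match type of G with
  | (?a + ?b - ?c - ?z)%C = _ =>
      replace z with (RtoC 0) in G by reflexivity;
      replace a with ((a + b - c - RtoC 0) + (c - b))%C by ring; rewrite G; ring
  end.
Qed.

Lemma is_RInt_exp_neg (u v : R) : is_RInt (fun y => exp (- y)) u v (exp (- u) - exp (- v)).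
Proof.
  replace (exp (- u) - exp (- v)) with (minus ((fun y => - exp (- y)) v) ((fun y => - exp (- y)) u)).
  2:{ unfold minus, plus, opp; simpl. ring. }
  apply (is_RInt_derive (V := R_CompleteNormedModule) (fun y => - exp (- y))).
  - intros x _. auto_derive. auto. ring.
  - intros x _. apply (ex_derive_continuous (K := R_AbsRing) (V := R_NormedModule)). auto_derive. auto.
Qed.

Lemma RInt_exp_decay_bound {V : CompleteNormedModule R_AbsRing} (h : R -> V) M u v :
  0 <= u <= v -> ex_RInt h u v -> (forall y, u <= y <= v -> norm (h y) <= M * exp (- y)) ->
  norm (RInt h u v) <= M * exp (- u).
Proof.
  intros Huv Hex HM.
  assert (0 <= M). { specialize (HM u ltac:(lra)). pose proof (norm_ge_0 (h u)).
    pose proof (exp_pos (- u)). nra. }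
  eapply Rle_trans. apply (norm_RInt_le h (fun y => M * exp (- y)) u v _ (M * (exp (- u) - exp (- v)))).
  lra. auto. apply RInt_correct; auto.
  apply (is_RInt_scal (V := R_NormedModule) _ _ _ M _ (is_RInt_exp_neg u v)).
  pose proof (exp_pos (- v)). nra.
Qed.

Lemma exp_neg_small M eps : 0 < eps -> exists N, 0 <= N /\ M * exp (- N) < eps.
Proof.
  intros He. destruct (Rle_dec M 0) as [HM|HM].
  - exists 0. split. lra. pose proof (exp_pos (-0)). nra.
  - exists (M / eps). assert (HN : 0 <= M / eps) by (apply Rlt_le, Rdiv_lt_0_compat; lra).
    split. auto.
    assert (exp (- (M / eps)) <= / (1 + M / eps)).
    { rewrite exp_Ropp. apply Rinv_le_contravar. lra. apply exp_ineq1_le. }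
    assert (M * exp (- (M / eps)) <= M * / (1 + M / eps)) by (apply Rmult_le_compat_l; lra).
    assert (M * / (1 + M / eps) < eps).
    { apply Rmult_lt_reg_r with (r := 1 + M / eps). lra.
      rewrite Rmult_assoc, Rinv_l by lra. field_simplify; [|lra]. lra. }
    lra.
Qed.

Lemma minus_plus_cancel_l (G : AbelianGroup) (a b : G) : minus (plus a b) a = b.
Proof.
  unfold minus. rewrite (plus_comm a), <- plus_assoc.
  etransitivity; [|exact (plus_zero_r b)]. f_equal. exact (plus_opp_r a).
Qed.

Lemma improper_int_of_exp_decay {V : CompleteNormedModule R_AbsRing} (h : R -> V) M :
  (forall u v, 0 <= u -> 0 <= v -> ex_RInt h u v) ->
  (forall y, 0 <= y -> norm (h y) <= M * exp (- y)) ->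
  exists L, filterlim (fun b => RInt h 0 b) (Rbar_locally p_infty) (locally L) /\
            is_RInt_gen h (at_point 0) (Rbar_locally p_infty) L.
Proof.
  intros Hex HM.
  assert (Hc : exists L, filterlim (fun b => RInt h 0 b) (Rbar_locally p_infty) (locally L)).
  { apply (filterlim_locally_cauchy (F := Rbar_locally p_infty)).
    intros eps. destruct (exp_neg_small M eps (cond_pos eps)) as [N [HN HNe]].
    exists (fun b => N < b). split. exists N; auto.
    assert (K : forall u v, N < u -> u <= v -> norm (minus (RInt h 0 v) (RInt h 0 u)) < eps).
    { intros u v Hu Huv.
      rewrite <- (RInt_Chasles h 0 u v), minus_plus_cancel_l by (apply Hex; lra).
      eapply Rle_lt_trans. apply RInt_exp_decay_bound. lra. apply Hex; lra. intros; apply HM; lra.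
      assert (exp (- u) <= exp (- N)) by (apply exp_le; lra).
      assert (0 <= M). { specialize (HM u ltac:(lra)). pose proof (norm_ge_0 (h u)).
        pose proof (exp_pos (- u)). nra. }
      nra. }
    intros u v Hu Hv. destruct (Rle_dec u v).
    - exact (norm_compat1 (V := V) _ _ _ (K u v ltac:(lra) ltac:(lra))).
    - apply ball_sym. exact (norm_compat1 (V := V) _ _ _ (K v u ltac:(lra) ltac:(lra))). }
  destruct Hc as [L HL]. exists L. split; auto.
  intros P HP. specialize (HL P HP).
  apply (Filter_prod _ _ _ (fun x => x = 0) (fun b => 0 < b /\ P (RInt h 0 b))).
  - reflexivity.
  - apply filter_and; auto. exists 0. auto.
  - intros x y -> [Hy Py]. exists (RInt h 0 y). split; auto. apply RInt_correct. apply Hex; lra.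
Qed.

Lemma improper_int_C_of_exp_decay (h : R -> C) M :
  (forall u v, 0 <= u -> 0 <= v -> @ex_RInt C_R_CompleteNormedModule h u v) ->
  (forall u v, 0 <= u -> 0 <= v -> ex_RInt (fun y => Cmod (h y)) u v) ->
  (forall y, 0 <= y -> Cmod (h y) <= M * exp (- y)) ->
  abs_integrable_0_inf h /\ exists L, is_integral_0_inf h L /\
    filterlim (fun b => @RInt C_R_CompleteNormedModule h 0 b) (Rbar_locally p_infty) (locally L).
Proof.
  intros Hex Hexabs HM. split.
  - destruct (improper_int_of_exp_decay (V := R_CompleteNormedModule) (fun y => Cmod (h y)) M)
      as [L [_ HL]]; auto.
    + intros y Hy. change (Rabs (Cmod (h y)) <= M * exp (- y)).
      rewrite Rabs_right by (apply Rle_ge, Cmod_ge_0). auto.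
    + exists L. exact HL.
  - destruct (improper_int_of_exp_decay (V := C_R_CompleteNormedModule) h M) as [L [HL1 HL2]]; auto.
    + intros y Hy. rewrite <- Cmod_norm. auto.
    + exists L. split; auto.
Qed.

Lemma filterlim_Cmod (T : Type) (F : (T -> Prop) -> Prop) (f : T -> C) (L : C) :
  Filter F ->
  (filterlim f F (locally L) <-> forall eps, 0 < eps -> F (fun x => Cmod (f x - L) < eps)).
Proof.
  intros HF. split.
  - intros H eps He.
    assert (Hball : locally L (fun z => Cmod (z - L) < eps)).
    { exists (mkposreal (eps / sqrt 2) (Rdiv_lt_0_compat _ _ He (sqrt_lt_R0 2 ltac:(lra)))).
      intros z Hz. apply C_NormedModule_mixin_compat2 in Hz. simpl in Hz.
      assert (sqrt 2 * (eps / sqrt 2) = eps) by (field; apply Rgt_not_eq, sqrt_lt_R0; lra).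
      change (minus z L) with (z - L)%C in Hz. lra. }
    apply H in Hball. exact Hball.
  - intros H P [eps HP]. unfold filtermap. apply (filter_imp (fun x => Cmod (f x - L) < eps)).
    intros x Hx. apply HP. apply C_NormedModule_mixin_compat1. exact Hx.
    apply H. apply cond_pos.
Qed.

Lemma lim_close (f1 f2 : R -> C) l1 l2 K :
  filterlim f1 (Rbar_locally p_infty) (locally l1) ->
  filterlim f2 (Rbar_locally p_infty) (locally l2) ->
  Rbar_locally p_infty (fun b => Cmod (f1 b - f2 b) <= K) ->
  Cmod (l1 - l2) <= K.
Proof.
  intros H1 H2 H3. apply Rnot_lt_le. intros Hc.
  set (eta := (Cmod (l1 - l2) - K) / 2).
  assert (Heta : 0 < eta) by (unfold eta; lra).
  pose proof (proj1 (filterlim_Cmod _ _ _ _ (Rbar_locally_filter p_infty).(filter_filter)) H1 eta Heta) as E1.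
  pose proof (proj1 (filterlim_Cmod _ _ _ _ (Rbar_locally_filter p_infty).(filter_filter)) H2 eta Heta) as E2.
  destruct (filter_ex (F := Rbar_locally p_infty) _ (filter_and _ _ E1 (filter_and _ _ E2 H3)))
    as [b [B1 [B2 B3]]].
  assert (Cmod (l1 - l2) <= Cmod (f1 b - l1) + Cmod (f1 b - f2 b) + Cmod (f2 b - l2)).
  { replace (l1 - l2)%C with (- (f1 b - l1) + (f1 b - f2 b) + (f2 b - l2))%C by ring.
    eapply Rle_trans. apply Cmod_triangle. eapply Rle_trans. apply Rplus_le_compat_r. apply Cmod_triangle.
    rewrite Cmod_opp. lra. }
  unfold eta in *. lra.
Qed.

(** Completing the square: e^{-c y^2 + K y} <= e^{(K+1)^2/(4c)} e^{-y}. *)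
Lemma gauss_le_exp c K y : 0 < c -> exp (- c * y^2 + K * y) <= exp ((K + 1)^2 / (4 * c)) * exp (- y).
Proof.
  intros Hc. rewrite <- exp_plus. apply exp_le.
  assert (0 <= c * (y - (K + 1) / (2 * c))^2) by (apply Rmult_le_pos; [lra| apply pow2_ge_0]).
  replace (c * (y - (K + 1) / (2 * c))^2) with (c * y^2 - (K + 1) * y + (K + 1)^2 / (4 * c)) in H
    by (field; lra).
  lra.
Qed.

Lemma contour_limit (F : (R -> Prop) -> Prop) (FF : Filter F) (I rot arc : R -> C) (L c : C) :
  Cmod c = 1 -> filterlim rot F (locally L) -> filterlim arc F (locally (RtoC 0)) ->
  F (fun b => I b = (rot b * c - arc b)%C) -> filterlim I F (locally (c * L)%C).
Proof.
  intros Hc Hrot Harc HI. apply (filterlim_Cmod _ _ _ _ FF). intros eps He.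
  pose proof (proj1 (filterlim_Cmod _ _ _ _ FF) Hrot (eps / 2) ltac:(lra)) as E1.
  pose proof (proj1 (filterlim_Cmod _ _ _ _ FF) Harc (eps / 2) ltac:(lra)) as E2.
  generalize (filter_and _ _ HI (filter_and _ _ E1 E2)). apply filter_imp.
  intros b [-> [B1 B2]].
  replace (rot b * c - arc b - c * L)%C with ((rot b - L) * c + - (arc b - RtoC 0))%C by ring.
  eapply Rle_lt_trans. apply Cmod_triangle. rewrite Cmod_opp, Cmod_mult, Hc. lra.
Qed.

Lemma trig_facts al t : 0 < al < PI / 2 -> 0 <= t <= al ->
  cos al <= cos t /\ 0 < cos al /\ 0 <= sin t /\ sin t <= sin al /\ 0 < sin al /\
  sin t <= 1 /\ cos t <= 1 /\ sin t ^ 2 + cos t ^ 2 = 1.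
Proof.
  intros Hal Ht. pose proof PI_RGT_0.
  repeat split.
  - destruct (Req_dec t al). subst; lra. apply Rlt_le, cos_decreasing_1; lra.
  - apply cos_gt_0; lra.
  - apply sin_ge_0; lra.
  - apply sin_incr_1; lra.
  - apply sin_gt_0; lra.
  - apply SIN_bound.
  - apply COS_bound.
  - rewrite <- !Rsqr_pow2. apply sin2_cos2.
Qed.

Section Chirp.
Variables (a y1 al : R) (f : C -> C).
Hypothesis Ha : 0 < a.
Hypothesis Hal : 0 < al < PI / 2.
Hypothesis Hf : forall z, sector al z -> ex_derive (K := C_AbsRing) (V := C_NormedModule) f z.

Definition chirp (z : C) : C := (gauss_factor (0, a) y1 z * f z)%C.

Lemma chirp_real y : chirp (RtoC y) = real_integrand a y1 f y.
Proof.
  unfold chirp, real_integrand, gauss_factor. f_equal. f_equal.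
  unfold RtoC, Cmult, Cminus, Cplus, Copp; simpl. f_equal; ring.
Qed.

Lemma f_diff r t : 0 <= r -> 0 <= t <= al -> exists l, has_cderiv f (polar r t) l.
Proof. intros H1 H2. apply has_cderiv_of_ex_derive. apply Hf. apply polar_sector; auto. Qed.

Lemma chirp_diff r t : 0 <= r -> 0 <= t <= al -> exists l, has_cderiv chirp (polar r t) l.
Proof.
  intros H1 H2. apply (has_cderiv_gauss_mult (fun z => exists r t, 0 <= r /\ 0 <= t <= al /\ z = polar r t)).
  - intros z (r' & t' & Hr' & Ht' & ->). apply f_diff; auto.
  - exists r, t. auto.
Qed.

Lemma chirp_cont r t : 0 <= r -> 0 <= t <= al -> ccont_pt chirp (polar r t).
Proof. intros H1 H2. destruct (chirp_diff r t H1 H2) as [l Hl]. eapply has_cderiv_cont; eauto. Qed.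

Lemma Cmod_chirp_polar r t :
  Cmod (chirp (polar r t)) = exp (- a * (2 * (r * cos t - y1) * (r * sin t))) * Cmod (f (polar r t)).
Proof.
  unfold chirp. rewrite Cmod_mult, Cmod_gauss_factor. f_equal. f_equal. rewrite polar_eq. simpl. ring.
Qed.

(** Gaussian decay rate of the chirp along the ray of angle [al]. *)
Definition ray_decay := 2 * a * cos al * sin al.

Lemma ray_decay_pos : 0 < ray_decay.
Proof.
  destruct (trig_facts al al Hal ltac:(lra)) as (_ & H1 & _ & _ & H2 & _).
  unfold ray_decay. repeat apply Rmult_lt_0_compat; lra.
Qed.

Lemma chirp_ray_bound A B : 0 <= A -> 0 <= B ->
  (forall y, 0 <= y -> Cmod (f (polar y al)) <= A * exp (B * y)) ->
  forall y, 0 <= y -> Cmod (chirp (polar y al)) <= A * exp (- ray_decay * y^2 + (2 * a * Rabs y1 + B) * y).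
Proof.
  intros HA HB Hb y Hy. rewrite Cmod_chirp_polar.
  destruct (trig_facts al al Hal ltac:(lra)) as (_ & Hca & _ & _ & Hsa & Hs1 & _).
  assert (exp (- a * (2 * (y * cos al - y1) * (y * sin al))) <=
          exp (- ray_decay * y^2 + 2 * a * Rabs y1 * y)).
  { apply exp_le. unfold ray_decay.
    assert (y1 * sin al <= Rabs y1).
    { pose proof (Rle_abs y1). pose proof (Rabs_pos y1). destruct (Rle_dec 0 y1); nra. }
    assert (2 * a * y * (y1 * sin al) <= 2 * a * y * Rabs y1) by (apply Rmult_le_compat_l; nra).
    nra. }
  specialize (Hb y Hy). pose proof (Cmod_ge_0 (f (polar y al))).
  replace (exp (- ray_decay * y^2 + (2 * a * Rabs y1 + B) * y)) with
    (exp (- ray_decay * y^2 + 2 * a * Rabs y1 * y) * exp (B * y)) by (rewrite <- exp_plus; f_equal; ring).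
  pose proof (exp_pos (- a * (2 * (y * cos al - y1) * (y * sin al)))).
  pose proof (exp_pos (B * y)).
  nra.
Qed.

Lemma rotated_improper A B : 0 <= A -> 0 <= B ->
  (forall y, 0 <= y -> Cmod (f (polar y al)) <= A * exp (B * y)) ->
  abs_integrable_0_inf (rotated_integrand a y1 al f) /\
  exists L, is_integral_0_inf (rotated_integrand a y1 al f) L /\
    filterlim (fun b => @RInt C_R_CompleteNormedModule (fun y => chirp (polar y al)) 0 b)
      (Rbar_locally p_infty) (locally L).
Proof.
  intros HA HB Hb.
  apply (improper_int_C_of_exp_decay (fun y => chirp (polar y al))
           (A * exp ((2 * a * Rabs y1 + B + 1)^2 / (4 * ray_decay)))).
  - intros u v Hu Hv. apply (ray_ex_RInt chirp al); auto; try lra. intros; eapply chirp_cont; eauto.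
  - intros u v Hu Hv. apply (ray_ex_RInt_Cmod chirp al); auto; try lra. intros; eapply chirp_cont; eauto.
  - intros y Hy. eapply Rle_trans. apply (chirp_ray_bound A B HA HB Hb y Hy).
    rewrite (Rmult_assoc A). apply Rmult_le_compat_l. auto.
    apply gauss_le_exp, ray_decay_pos.
Qed.

End Chirp.

(** ** Part (ii): growth e^{B Im z} *)

Lemma sin_ge_tcos t : 0 <= t <= PI / 2 -> t * cos t <= sin t.
Proof.
  intros Ht. destruct (Req_dec t 0). subst. rewrite sin_0. lra.
  destruct (MVT_cor2 (fun s => sin s - s * cos s) (fun s => s * sin s) 0 t) as [c [E Hc]].
  lra. intros c _. apply is_derive_Reals. auto_derive. auto. ring.
  rewrite sin_0, Rmult_0_l in E. pose proof PI_RGT_0.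
  assert (0 <= sin c) by (apply sin_ge_0; lra).
  assert (0 <= c * sin c * (t - 0)) by (apply Rmult_le_pos; [apply Rmult_le_pos; lra | lra]). lra.
Qed.

Lemma is_RInt_exp_lin k a : 0 < k -> is_RInt (fun t => exp (- k * t)) 0 a ((1 - exp (- k * a)) / k).
Proof.
  intros Hk.
  replace ((1 - exp (- k * a)) / k)
    with (minus ((fun s => - exp (- k * s) / k) a) ((fun s => - exp (- k * s) / k) 0)).
  2:{ unfold minus, plus, opp; simpl. rewrite Rmult_0_r, exp_0. field. lra. }
  apply (is_RInt_derive (V := R_CompleteNormedModule) (fun s => - exp (- k * s) / k)).
  - intros x _. auto_derive. auto. field. lra.
  - intros x _. apply (ex_derive_continuous (K := R_AbsRing) (V := R_NormedModule)). auto_derive. auto.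
Qed.

Section PartII.
Variables (a y1 al : R) (f : C -> C).
Hypothesis Ha : 0 < a.
Hypothesis Hal : 0 < al < PI / 2.
Hypothesis Hf : forall z, sector al z -> ex_derive (K := C_AbsRing) (V := C_NormedModule) f z.
Variables A B : R.
Hypothesis HA : 0 <= A.
Hypothesis HB : 0 <= B.
Hypothesis Hgrowth : forall z, sector al z -> Cmod (f z) <= A * exp (B * Im z).

Let ca := cos al.

Lemma ca_pos : 0 < ca.
Proof. destruct (trig_facts al al Hal ltac:(lra)) as (_ & H & _). exact H. Qed.

(** Beyond this radius the chirp decay dominates the growth of [f] on the arc. *)
Definition arc_radius := (2 * a * Rabs y1 + B) / (a * ca) + 1.

Lemma arc_radius_ge1 : 1 <= arc_radius.
Proof.
  unfold arc_radius. pose proof ca_pos. pose proof (Rabs_pos y1).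
  assert (0 <= (2 * a * Rabs y1 + B) / (a * ca))
    by (apply Rmult_le_pos; [nra| apply Rlt_le, Rinv_0_lt_compat; nra]).
  lra.
Qed.

Lemma arc_exponent_le R0 t : arc_radius <= R0 -> 0 <= t <= al ->
  - a * (2 * (R0 * cos t - y1) * (R0 * sin t)) + B * (R0 * sin t) <= - (a * ca^2 * R0^2) * t.
Proof.
  intros HR Ht. pose proof arc_radius_ge1. pose proof ca_pos.
  destruct (trig_facts al t Hal Ht) as (Hco & _ & Hs0 & _ & _ & Hs1 & Hc1 & _).
  fold ca in Hco.
  assert (Hst : t * ca <= sin t) by (pose proof (sin_ge_tcos t ltac:(lra)); nra).
  assert (HR1 : a * R0 * ca >= 2 * a * Rabs y1 + B).
  { unfold arc_radius in HR.
    assert (Hq : (2 * a * Rabs y1 + B) / (a * ca) <= R0) by lra.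
    apply Rmult_le_compat_r with (r := a * ca) in Hq; [|nra].
    field_simplify in Hq; nra. }
  assert (Hlin : 2 * a * R0 * cos t - 2 * a * y1 - B >= a * R0 * ca).
  { assert (2 * a * R0 * cos t >= 2 * a * R0 * ca) by (apply Rle_ge, Rmult_le_compat_l; nra).
    assert (2 * a * y1 <= 2 * a * Rabs y1) by (apply Rmult_le_compat_l; [lra| apply Rle_abs]). lra. }
  assert (R0 * sin t * (2 * a * R0 * cos t - 2 * a * y1 - B) >= R0 * sin t * (a * R0 * ca))
    by (apply Rle_ge, Rmult_le_compat_l; nra).
  assert (0 <= a * R0 * ca) by (apply Rmult_le_pos; [apply Rmult_le_pos|]; lra).
  assert (R0 * (t * ca) <= R0 * sin t) by (apply Rmult_le_compat_l; lra).
  assert (R0 * sin t * (a * R0 * ca) >= R0 * (t * ca) * (a * R0 * ca))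
    by (apply Rle_ge, Rmult_le_compat_r; lra).
  replace (- a * (2 * (R0 * cos t - y1) * (R0 * sin t)) + B * (R0 * sin t)) with
    (- (R0 * sin t * (2 * a * R0 * cos t - 2 * a * y1 - B))) by ring.
  replace (- (a * ca ^ 2 * R0 ^ 2) * t) with (- (R0 * (t * ca) * (a * R0 * ca))) by ring.
  lra.
Qed.

Lemma arc_integrand_bound R0 t : arc_radius <= R0 -> 0 <= t <= al ->
  Cmod (chirp a y1 f (polar R0 t) * polar_dt R0 t)%C <= A * R0 * exp (- (a * ca^2 * R0^2) * t).
Proof.
  intros HR Ht. pose proof arc_radius_ge1.
  destruct (trig_facts al t Hal Ht) as (_ & _ & Hs0 & _).
  rewrite Cmod_mult, Cmod_polar_dt, Rabs_right by lra. rewrite Cmod_chirp_polar.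
  assert (Hf1 : Cmod (f (polar R0 t)) <= A * exp (B * (R0 * sin t))).
  { replace (R0 * sin t) with (Im (polar R0 t)) by (rewrite polar_eq; reflexivity).
    apply Hgrowth. apply polar_sector; lra. }
  assert (E : exp (- a * (2 * (R0 * cos t - y1) * (R0 * sin t))) * exp (B * (R0 * sin t))
              <= exp (- (a * ca^2 * R0^2) * t))
    by (rewrite <- exp_plus; apply exp_le, arc_exponent_le; auto).
  pose proof (exp_pos (- a * (2 * (R0 * cos t - y1) * (R0 * sin t)))).
  pose proof (Cmod_ge_0 (f (polar R0 t))).
  assert (exp (- a * (2 * (R0 * cos t - y1) * (R0 * sin t))) * Cmod (f (polar R0 t)) <=
          A * exp (- (a * ca^2 * R0^2) * t)).
  { eapply Rle_trans. apply Rmult_le_compat_l. lra. exact Hf1. nra. }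
  nra.
Qed.

Lemma arc_int_bound R0 : arc_radius <= R0 ->
  Cmod (@RInt C_R_CompleteNormedModule (fun t => chirp a y1 f (polar R0 t) * polar_dt R0 t)%C 0 al)
  <= A / (a * ca^2 * R0).
Proof.
  intros HR. pose proof arc_radius_ge1. pose proof ca_pos.
  set (k := a * ca^2 * R0^2).
  assert (Hk : 0 < k) by (unfold k; apply Rmult_lt_0_compat; [apply Rmult_lt_0_compat|]; nra).
  eapply Rle_trans.
  apply (RInt_Cmod_le _ (fun t => scal (A * R0) (exp (- k * t))) 0 al
           (scal (A * R0) ((1 - exp (- k * al)) / k))).
  - lra.
  - apply (arc_ex_RInt _ al); try lra. intros; eapply chirp_cont; eauto.
  - intros t Ht. apply arc_integrand_bound; auto.
  - apply (is_RInt_scal (V := R_NormedModule)). apply is_RInt_exp_lin; auto.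
  - change (scal (A * R0) ((1 - exp (- k * al)) / k)) with (A * R0 * ((1 - exp (- k * al)) / k)).
    pose proof (exp_pos (- k * al)).
    replace (A / (a * ca^2 * R0)) with (A * R0 * (1 / k)) by (unfold k; field; nra).
    apply Rmult_le_compat_l. nra. apply Rmult_le_compat_r. apply Rlt_le, Rinv_0_lt_compat; auto. lra.
Qed.

Lemma arc_int_vanishes :
  filterlim (fun b => @RInt C_R_CompleteNormedModule
                        (fun t => chirp a y1 f (polar b t) * polar_dt b t)%C 0 al)
    (Rbar_locally p_infty) (locally (RtoC 0)).
Proof.
  apply (filterlim_Cmod _ _ _ _ (Rbar_locally_filter p_infty).(filter_filter)).
  intros eps He. pose proof ca_pos.
  assert (Hk : 0 < a * ca ^ 2) by (apply Rmult_lt_0_compat; [lra | apply pow_lt; lra]).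
  exists (Rmax arc_radius (2 * A / (a * ca^2 * eps))). intros b Hb.
  pose proof (Rmax_l arc_radius (2 * A / (a * ca^2 * eps))).
  pose proof (Rmax_r arc_radius (2 * A / (a * ca^2 * eps))).
  assert (HR : arc_radius <= b) by lra.
  assert (Hb2 : 2 * A / (a * ca^2 * eps) < b) by lra.
  pose proof arc_radius_ge1.
  rewrite Cminus_0.
  eapply Rle_lt_trans. apply arc_int_bound; auto.
  apply Rmult_lt_compat_r with (r := a * ca ^ 2 * eps) in Hb2; [|nra].
  field_simplify in Hb2; [|nra].
  apply Rmult_lt_reg_r with (r := a * ca ^ 2 * b). nra.
  field_simplify; [|nra]. nra.
Qed.

Theorem part_ii :
  abs_integrable_0_inf (rotated_integrand a y1 al f) /\
  (forall R0 : R, 0 < R0 -> abs_integrable_0_R (real_integrand a y1 f) R0) /\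
  exists (L : C) (I : R -> C),
    is_integral_0_inf (rotated_integrand a y1 al f) L /\
    (forall R0 : R, 0 < R0 -> is_integral_0_R (real_integrand a y1 f) R0 (I R0)) /\
    filterlim I (Rbar_locally p_infty) (locally (Cmult (cexp ((0:R), al)) L)).
Proof.
  assert (Hray : forall y, 0 <= y -> Cmod (f (polar y al)) <= A * exp (B * y)).
  { intros y Hy. eapply Rle_trans. apply Hgrowth. apply polar_sector; lra.
    apply Rmult_le_compat_l; auto. apply exp_le. rewrite polar_eq. simpl.
    destruct (trig_facts al al Hal ltac:(lra)) as (_ & _ & _ & _ & _ & Hs1 & _).
    apply Rmult_le_compat_l; nra. }
  assert (Hreal : forall b, 0 <= b ->
    @RInt C_R_CompleteNormedModule (real_integrand a y1 f) 0 b
    = @RInt C_R_CompleteNormedModule (fun r => chirp a y1 f (RtoC r)) 0 b).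
  { intros b _. apply RInt_ext. intros x _. symmetry. apply chirp_real. }
  assert (Hchirp_real : forall x, chirp a y1 f (polar x 0) = real_integrand a y1 f x)
    by (intros x; rewrite polar_0; apply chirp_real).
  destruct (rotated_improper a y1 al f Ha Hal Hf A B HA HB Hray) as [Habs [L [HL Hlim]]].
  split; [exact Habs|]. split.
  { intros R0 HR0.
    apply (ex_RInt_ext (V := R_CompleteNormedModule) (fun r => Cmod (chirp a y1 f (polar r 0)))).
    { intros x _. rewrite Hchirp_real. reflexivity. }
    apply (ray_ex_RInt_Cmod (chirp a y1 f) al); try lra. intros; eapply chirp_cont; eauto. }
  exists L, (fun b => @RInt C_R_CompleteNormedModule (real_integrand a y1 f) 0 b).
  split; [exact HL|]. split.
  { intros R0 HR0. apply (RInt_correct (V := C_R_CompleteNormedModule)).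
    apply (ex_RInt_ext (V := C_R_CompleteNormedModule) (fun r => chirp a y1 f (polar r 0))).
    { intros x _. apply Hchirp_real. }
    apply (ray_ex_RInt (chirp a y1 f) al); try lra. intros; eapply chirp_cont; eauto. }
  apply (contour_limit _ (Rbar_locally_filter p_infty).(filter_filter) _ _ _ L _ (Cmod_eit al) Hlim
           arc_int_vanishes).
  exists 0. intros b Hb. rewrite Hreal by lra.
  apply (cauchy_sector (chirp a y1 f) al b); try lra. apply chirp_diff; auto.
Qed.

End PartII.

(** ** Part (i): growth e^{B |z|}, Gaussian regularization *)

Lemma gauss_factor_real e c y : gauss_factor ((- e)%R, 0%R) c (RtoC y) = RtoC (exp (- e * (y - c)^2)).
Proof.
  unfold gauss_factor, cexp, RtoC, Cmult, Cminus, Cplus, Copp; simpl.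
  replace (- e * ((y + - c) * (0 + - 0) + (0 + - 0) * (y + - c))
           + 0 * ((y + - c) * (y + - c) - (0 + - 0) * (0 + - 0))) with 0 by ring.
  rewrite cos_0, sin_0. f_equal. rewrite Rmult_1_r. f_equal. ring. ring.
Qed.

Lemma sq_le_exp t : 0 <= t -> t^2 <= 4 * exp t.
Proof.
  intros Ht. replace (exp t) with (exp (t/2) * exp (t/2)) by (rewrite <- exp_plus; f_equal; field).
  pose proof (exp_ineq1_le (t/2)). nra.
Qed.

Section PartI.
Variables (a y1 al : R) (f : C -> C).
Hypothesis Ha : 0 < a.
Hypothesis Hal : 0 < al < PI / 2.
Hypothesis Hf : forall z, sector al z -> ex_derive (K := C_AbsRing) (V := C_NormedModule) f z.
Variables A B : R.
Hypothesis HA : 0 <= A.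
Hypothesis HB : 0 <= B.
Hypothesis Hgrowth : forall z, sector al z -> Cmod (f z) <= A * exp (B * Cmod z).
Variable y0 : R.

Let g := chirp a y1 f.
Let cc := ray_decay a al.

Definition regularized (e : R) (z : C) : C := (gauss_factor ((- e)%R, 0%R) y0 z * g z)%C.

Definition real_regularized (e : R) (y : R) : C :=
  Cmult (RtoC (exp (- e * (y - y0)^2))) (real_integrand a y1 f y).

Lemma regularized_diff e r t : 0 <= r -> 0 <= t <= al -> exists l, has_cderiv (regularized e) (polar r t) l.
Proof.
  intros H1 H2. apply (has_cderiv_gauss_mult (fun z => exists r t, 0 <= r /\ 0 <= t <= al /\ z = polar r t)).
  - intros z (r' & t' & Hr' & Ht' & ->). apply (chirp_diff a y1 al f Hf); auto.
  - exists r, t. auto.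
Qed.

Lemma regularized_cont e r t : 0 <= r -> 0 <= t <= al -> ccont_pt (regularized e) (polar r t).
Proof. intros H1 H2. destruct (regularized_diff e r t H1 H2) as [l Hl]. eapply has_cderiv_cont; eauto. Qed.

Lemma regularized_real e y : regularized e (RtoC y) = real_regularized e y.
Proof. unfold regularized, real_regularized. rewrite gauss_factor_real. unfold g. rewrite chirp_real. reflexivity. Qed.

Lemma f_polar_bound r t : 0 <= r -> 0 <= t <= al -> Cmod (f (polar r t)) <= A * exp (B * r).
Proof.
  intros Hr Ht. eapply Rle_trans. apply Hgrowth, polar_sector; auto. rewrite Cmod_polar by lra. lra.
Qed.

Lemma real_regularized_bound e : 0 < e -> forall y, 0 <= y ->
  Cmod (real_regularized e y) <= A * exp (- e * y^2 + (2 * e * Rabs y0 + B) * y).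
Proof.
  intros He y Hy. unfold real_regularized, real_integrand.
  rewrite !Cmod_mult, Cmod_R, Rabs_right by (apply Rle_ge, Rlt_le, exp_pos).
  change (cexp (0, a * (y - y1) ^ 2)) with (eit (a * (y - y1) ^ 2)). rewrite Cmod_eit, Rmult_1_l.
  pose proof (f_polar_bound y 0 Hy ltac:(lra)) as Hfy. rewrite polar_0 in Hfy.
  assert (exp (- e * (y - y0)^2) * exp (B * y) <= exp (- e * y^2 + (2 * e * Rabs y0 + B) * y)).
  { rewrite <- exp_plus. apply exp_le.
    assert (y * y0 <= y * Rabs y0) by (apply Rmult_le_compat_l; [lra| apply Rle_abs]).
    assert (0 <= e * y0^2) by (apply Rmult_le_pos; [lra| apply pow2_ge_0]).
    assert (e * (y * y0) <= e * (y * Rabs y0)) by (apply Rmult_le_compat_l; lra).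
    nra. }
  pose proof (exp_pos (- e * (y - y0)^2)). pose proof (Cmod_ge_0 (f (RtoC y))).
  nra.
Qed.

Lemma gauss_factor_ray_bound e y : 0 <= e -> 0 <= y ->
  Cmod (gauss_factor ((- e)%R, 0%R) y0 (polar y al)) <= exp (e * y^2).
Proof.
  intros He Hy. rewrite Cmod_gauss_factor. apply exp_le. rewrite polar_eq. simpl.
  pose proof (SIN_bound al).
  assert (0 <= e * (y * cos al - y0)^2) by (apply Rmult_le_pos; [lra| apply pow2_ge_0]).
  assert (e * (y * sin al)^2 <= e * y^2).
  { apply Rmult_le_compat_l. lra. replace ((y * sin al)^2) with (y^2 * (sin al)^2) by ring.
    assert (sin al ^2 <= 1) by nra. assert (0 <= y^2) by apply pow2_ge_0. nra. }
  nra.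
Qed.

Let Cc := 2 * a * Rabs y1 + B.

Lemma f_ray_bound y : 0 <= y -> Cmod (f (polar y al)) <= A * exp (B * y).
Proof. intros Hy. apply f_polar_bound; lra. Qed.

Lemma regularized_ray_bound e : 0 <= e -> e <= cc / 2 -> forall y, 0 <= y ->
  Cmod (regularized e (polar y al)) <= A * exp (- (cc / 2) * y^2 + Cc * y).
Proof.
  intros He He2 y Hy. unfold regularized. rewrite Cmod_mult.
  pose proof (gauss_factor_ray_bound e y He Hy).
  pose proof (chirp_ray_bound a y1 al f Ha Hal A B HA HB f_ray_bound y Hy).
  pose proof (Cmod_ge_0 (gauss_factor ((- e)%R, 0%R) y0 (polar y al))).
  pose proof (Cmod_ge_0 (g (polar y al))).
  assert (exp (e * y^2) * exp (- cc * y^2 + (2 * a * Rabs y1 + B) * y) <= exp (- (cc / 2) * y^2 + Cc * y)).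
  { rewrite <- exp_plus. apply exp_le. unfold Cc. assert (0 <= y^2) by apply pow2_ge_0.
    assert (e * y^2 <= cc / 2 * y^2) by (apply Rmult_le_compat_r; lra). lra. }
  pose proof (exp_pos (e * y^2)).
  assert (Cmod (gauss_factor ((- e)%R, 0%R) y0 (polar y al)) * Cmod (g (polar y al)) <=
          exp (e * y^2) * (A * exp (- cc * y^2 + (2 * a * Rabs y1 + B) * y))).
  { apply Rmult_le_compat; auto. }
  nra.
Qed.

Lemma gauss_factor_ray_sub1 e y : 0 < e -> e <= 1 -> e <= cc / 8 -> 0 <= y ->
  Cmod (gauss_factor ((- e)%R, 0%R) y0 (polar y al) - 1)%C <=
  8 * e * exp (y + Rabs y0) * exp (cc / 4 * y^2 + 2 * y0^2).
Proof.
  intros He He1 He2 Hy. pose proof (ray_decay_pos a al Ha Hal) as Hcc. fold cc in Hcc.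
  set (w := polar y al).
  set (u := (((- e)%R, 0%R) * ((w - RtoC y0) * (w - RtoC y0)))%C).
  set (q := (y + Rabs y0)^2).
  assert (Hq0 : 0 <= q) by apply pow2_ge_0.
  assert (Hu : Cmod u <= e * q).
  { unfold u. rewrite !Cmod_mult.
    replace (Cmod ((- e)%R, 0%R)) with e.
    2:{ unfold Cmod; simpl. replace (- e * (- e * 1) + 0 * (0 * 1)) with (e^2) by ring.
        rewrite sqrt_pow2; lra. }
    assert (Cmod (w - RtoC y0) <= y + Rabs y0).
    { eapply Rle_trans. unfold Cminus. apply Cmod_triangle. rewrite Cmod_opp, Cmod_R.
      unfold w. rewrite Cmod_polar by lra. lra. }
    pose proof (Cmod_ge_0 (w - RtoC y0)). unfold q.
    assert (Cmod (w - RtoC y0) * Cmod (w - RtoC y0) <= (y + Rabs y0)^2) by nra.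
    apply Rmult_le_compat_l; lra. }
  assert (Heq : e * q <= cc / 4 * y^2 + 2 * y0^2).
  { unfold q. assert ((y + Rabs y0)^2 <= 2 * y^2 + 2 * y0^2).
    { rewrite <- (pow2_abs y0). pose proof (pow2_ge_0 (y - Rabs y0)). nra. }
    assert (0 <= y^2) by apply pow2_ge_0. assert (0 <= y0^2) by apply pow2_ge_0.
    nra. }
  assert (Hq4 : q <= 4 * exp (y + Rabs y0)) by (apply sq_le_exp; pose proof (Rabs_pos y0); lra).
  change (gauss_factor ((- e)%R, 0%R) y0 w) with (cexp u).
  eapply Rle_trans. apply cexp_sub1_bound. pose proof (Cmod_ge_0 u).
  assert (exp (Cmod u) <= exp (cc / 4 * y^2 + 2 * y0^2)) by (apply exp_le; lra).
  pose proof (exp_pos (Cmod u)). pose proof (exp_pos (y + Rabs y0)).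
  apply Rmult_le_compat; nra.
Qed.

Definition reg_error_const :=
  8 * A * exp (Rabs y0 + 2 * y0^2) * exp ((Cc + 2)^2 / (4 * (3 * cc / 4))).

Lemma reg_error_const_ge0 : 0 <= reg_error_const.
Proof.
  unfold reg_error_const. pose proof (exp_pos (Rabs y0 + 2 * y0^2)).
  pose proof (exp_pos ((Cc + 2)^2 / (4 * (3 * cc / 4)))).
  apply Rmult_le_pos; [apply Rmult_le_pos; [apply Rmult_le_pos|]|]; lra.
Qed.

Lemma regularization_error e : 0 < e -> e <= 1 -> e <= cc / 8 -> forall y, 0 <= y ->
  Cmod (regularized e (polar y al) - g (polar y al))%C <= e * reg_error_const * exp (- y).
Proof.
  intros He He1 He2 y Hy. pose proof (ray_decay_pos a al Ha Hal) as Hcc. fold cc in Hcc.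
  replace (regularized e (polar y al) - g (polar y al))%C
    with ((gauss_factor ((- e)%R, 0%R) y0 (polar y al) - 1) * g (polar y al))%C
    by (unfold regularized; ring).
  rewrite Cmod_mult.
  pose proof (gauss_factor_ray_sub1 e y He He1 He2 Hy) as H1.
  pose proof (chirp_ray_bound a y1 al f Ha Hal A B HA HB f_ray_bound y Hy) as H2.
  fold cc g in H2. fold Cc in H2.
  pose proof (gauss_le_exp (3 * cc / 4) (Cc + 1) y ltac:(lra)) as H3.
  replace (Cc + 1 + 1) with (Cc + 2) in H3 by ring.
  assert (E : exp (y + Rabs y0) * exp (cc / 4 * y^2 + 2 * y0^2) * exp (- cc * y^2 + Cc * y) =
              exp (Rabs y0 + 2 * y0^2) * exp (- (3 * cc / 4) * y^2 + (Cc + 1) * y)).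
  { rewrite <- !exp_plus. f_equal. lra. }
  eapply Rle_trans. apply Rmult_le_compat; [apply Cmod_ge_0 | apply Cmod_ge_0 | exact H1 | exact H2].
  replace (8 * e * exp (y + Rabs y0) * exp (cc / 4 * y ^ 2 + 2 * y0 ^ 2) * (A * exp (- cc * y ^ 2 + Cc * y)))
    with (8 * e * A * (exp (y + Rabs y0) * exp (cc / 4 * y^2 + 2 * y0^2) * exp (- cc * y^2 + Cc * y)))
    by ring.
  rewrite E. unfold reg_error_const.
  pose proof (exp_pos (Rabs y0 + 2 * y0^2)).
  replace (e * (8 * A * exp (Rabs y0 + 2 * y0 ^ 2) * exp ((Cc + 2) ^ 2 / (4 * (3 * cc / 4)))) * exp (- y))
    with (8 * e * A * (exp (Rabs y0 + 2 * y0 ^ 2) * (exp ((Cc + 2) ^ 2 / (4 * (3 * cc / 4))) * exp (- y))))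
    by ring.
  apply Rmult_le_compat_l; [nra|]. apply Rmult_le_compat_l; [lra | exact H3].
Qed.

Let Ca := 2 * Rabs y0 + 2 * a * Rabs y1 + B.

(** Exponent of |e^{-e(z-y0)^2} e^{ia(z-y1)^2} e^{B|z|}| at z = b e^{it}: for
    e <= a cos al the oscillation term dominates the Gaussian one on the arc. *)
Lemma arc_exponent_le_reg e b t : 0 < e -> e <= 1 -> e <= a * cos al -> 0 <= b -> 0 <= t <= al ->
  - e * ((b * cos t - y0) ^ 2 - (b * sin t) ^ 2) - a * (2 * (b * cos t - y1) * (b * sin t)) + B * b
  <= - e * b^2 + Ca * b.
Proof.
  intros He He1 He2 Hb0 Ht.
  destruct (trig_facts al t Hal Ht) as (Hco & Hca & Hs0 & _ & _ & Hs1 & Hc1 & Hsc).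
  pose proof (COS_bound t) as Hcb.
  assert (H1 : 2 * b^2 * sin t * (e * sin t - a * cos t) <= 0).
  { assert (e * sin t <= a * cos t).
    { assert (e * sin t <= e) by nra. assert (a * cos al <= a * cos t) by (apply Rmult_le_compat_l; lra). lra. }
    assert (0 <= 2 * b^2 * sin t) by (assert (0 <= b^2) by apply pow2_ge_0; nra). nra. }
  assert (H2 : b * cos t * y0 <= b * Rabs y0).
  { assert (cos t * y0 <= Rabs y0).
    { eapply Rle_trans. apply Rle_abs. rewrite Rabs_mult. pose proof (Rabs_pos y0).
      assert (Rabs (cos t) <= 1) by (apply Rabs_le; lra). nra. }
    replace (b * cos t * y0) with (b * (cos t * y0)) by ring. apply Rmult_le_compat_l; lra. }
  assert (H3 : b * sin t * y1 <= b * Rabs y1).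
  { assert (sin t * y1 <= Rabs y1).
    { eapply Rle_trans. apply Rle_abs. rewrite Rabs_mult. pose proof (Rabs_pos y1).
      assert (Rabs (sin t) <= 1) by (apply Rabs_le; lra). nra. }
    replace (b * sin t * y1) with (b * (sin t * y1)) by ring. apply Rmult_le_compat_l; lra. }
  assert (H4 : e * (b * cos t * y0) <= e * (b * Rabs y0)) by (apply Rmult_le_compat_l; lra).
  assert (H5 : a * (b * sin t * y1) <= a * (b * Rabs y1)) by (apply Rmult_le_compat_l; lra).
  assert (H6 : e * (b * Rabs y0) <= b * Rabs y0).
  { assert (0 <= b * Rabs y0) by (apply Rmult_le_pos; [lra|apply Rabs_pos]). nra. }
  assert (H7 : 0 <= e * y0^2) by (apply Rmult_le_pos; [lra|apply pow2_ge_0]).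
  replace (- e * ((b * cos t - y0) ^ 2 - (b * sin t) ^ 2) - a * (2 * (b * cos t - y1) * (b * sin t)) + B * b)
    with (- e * b^2 * (sin t ^ 2 + cos t ^ 2) + 2 * b^2 * sin t * (e * sin t - a * cos t)
          + 2 * (e * (b * cos t * y0)) - e * y0^2 + 2 * (a * (b * sin t * y1)) + B * b) by ring.
  rewrite Hsc. unfold Ca. lra.
Qed.

Lemma arc_integrand_bound_reg e b t : 0 < e -> e <= 1 -> e <= a * cos al -> 0 <= b -> 0 <= t <= al ->
  Cmod (regularized e (polar b t) * polar_dt b t)%C <= A * exp (- e * b^2 + (Ca + 1) * b).
Proof.
  intros He He1 He2 Hb0 Ht.
  rewrite Cmod_mult, Cmod_polar_dt, Rabs_right by lra. unfold regularized, g.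
  rewrite Cmod_mult, Cmod_chirp_polar, Cmod_gauss_factor, polar_eq. cbn [fst snd]. rewrite <- polar_eq.
  set (X := - e * ((b * cos t - y0) ^ 2 - (b * sin t) ^ 2) - 0 * (2 * (b * cos t - y0) * (b * sin t))).
  set (Y := - a * (2 * (b * cos t - y1) * (b * sin t))).
  assert (HXY : X + Y + B * b <= - e * b^2 + Ca * b).
  { unfold X, Y. eapply Rle_trans; [|apply (arc_exponent_le_reg e b t); auto]. lra. }
  pose proof (f_polar_bound b t Hb0 Ht) as Hf1.
  pose proof (exp_pos X). pose proof (exp_pos Y). pose proof (Cmod_ge_0 (f (polar b t))).
  assert (Hbb : b <= exp b) by (pose proof (exp_ineq1_le b); lra).
  assert (Hmain : exp X * (exp Y * Cmod (f (polar b t))) <= A * exp (- e * b^2 + Ca * b)).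
  { replace (exp X * (exp Y * Cmod (f (polar b t)))) with ((exp X * exp Y) * Cmod (f (polar b t))) by ring.
    eapply Rle_trans. apply Rmult_le_compat_l. nra. exact Hf1.
    replace (exp X * exp Y * (A * exp (B * b))) with (A * exp (X + Y + B * b)) by (rewrite !exp_plus; ring).
    apply Rmult_le_compat_l. auto. apply exp_le. lra. }
  replace (exp (- e * b ^ 2 + (Ca + 1) * b)) with (exp (- e * b^2 + Ca * b) * exp b)
    by (rewrite <- exp_plus; f_equal; ring).
  pose proof (exp_pos (- e * b^2 + Ca * b)).
  assert (HP : 0 <= exp X * (exp Y * Cmod (f (polar b t))))
    by (apply Rmult_le_pos; [lra | apply Rmult_le_pos; lra]).
  eapply Rle_trans. apply Rmult_le_compat; [exact HP | exact Hb0 | exact Hmain | exact Hbb].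
  right. ring.
Qed.

Lemma arc_int_vanishes_reg e : 0 < e -> e <= 1 -> e <= a * cos al ->
  filterlim (fun b => @RInt C_R_CompleteNormedModule
                        (fun t => regularized e (polar b t) * polar_dt b t)%C 0 al)
    (Rbar_locally p_infty) (locally (RtoC 0)).
Proof.
  intros He He1 He2.
  apply (filterlim_Cmod _ _ _ _ (Rbar_locally_filter p_infty).(filter_filter)).
  intros eta Heta.
  set (K := exp ((Ca + 1 + 1)^2 / (4 * e))).
  destruct (exp_neg_small (al * A * K) eta Heta) as [N [HN HNe]].
  exists N. intros b Hbn. rewrite Cminus_0.
  eapply Rle_lt_trans.
  { apply (RInt_Cmod_le_const _ 0 al (A * exp (- e * b^2 + (Ca + 1) * b))); [lra| |].
    - apply (arc_ex_RInt _ al); try lra. intros; apply regularized_cont; auto.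
    - intros t Ht. apply arc_integrand_bound_reg; auto; lra. }
  pose proof (gauss_le_exp e (Ca + 1) b He) as Hg. fold K in Hg.
  assert (exp (- b) <= exp (- N)) by (apply exp_le; lra).
  pose proof (exp_pos (- b)). pose proof (exp_pos ((Ca + 1 + 1)^2 / (4 * e))). fold K in H1.
  assert (0 <= al * A) by (apply Rmult_le_pos; lra).
  assert ((al - 0) * (A * exp (- e * b^2 + (Ca + 1) * b)) <= al * A * K * exp (- b)).
  { replace (al * A * K * exp (- b)) with (al * A * (K * exp (- b))) by ring.
    rewrite Rminus_0_r, <- Rmult_assoc. apply Rmult_le_compat_l; auto. }
  assert (al * A * K * exp (- b) <= al * A * K * exp (- N)).
  { apply Rmult_le_compat_l; auto. apply Rmult_le_pos; lra. }
  lra.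
Qed.

Lemma real_regularized_improper e : 0 < e ->
  abs_integrable_0_inf (real_regularized e) /\ exists Le, is_integral_0_inf (real_regularized e) Le /\
    filterlim (fun b => @RInt C_R_CompleteNormedModule (real_regularized e) 0 b) (Rbar_locally p_infty) (locally Le).
Proof.
  intros He.
  assert (Hpol : forall x, regularized e (polar x 0) = real_regularized e x)
    by (intros x; rewrite polar_0; apply regularized_real).
  apply (improper_int_C_of_exp_decay (real_regularized e) (A * exp ((2 * e * Rabs y0 + B + 1)^2 / (4 * e)))).
  - intros u v Hu Hv.
    apply (ex_RInt_ext (V := C_R_CompleteNormedModule) (fun r => regularized e (polar r 0))).
    { intros x _. apply Hpol. }
    apply (ray_ex_RInt _ al); try lra. intros; apply regularized_cont; auto.
  - intros u v Hu Hv.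
    apply (ex_RInt_ext (V := R_CompleteNormedModule) (fun r => Cmod (regularized e (polar r 0)))).
    { intros x _. rewrite Hpol. reflexivity. }
    apply (ray_ex_RInt_Cmod _ al); try lra. intros; apply regularized_cont; auto.
  - intros y Hy. eapply Rle_trans. apply (real_regularized_bound e He y Hy).
    rewrite (Rmult_assoc A). apply Rmult_le_compat_l. auto. apply gauss_le_exp; auto.
Qed.

Lemma rotated_regularized_limit e : 0 <= e -> e <= cc / 2 ->
  exists Je, filterlim (fun b => @RInt C_R_CompleteNormedModule (fun y => regularized e (polar y al)) 0 b)
     (Rbar_locally p_infty) (locally Je).
Proof.
  intros He He2. pose proof (ray_decay_pos a al Ha Hal) as Hcc. fold cc in Hcc.
  destruct (improper_int_C_of_exp_decay (fun y => regularized e (polar y al))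
              (A * exp ((Cc + 1)^2 / (4 * (cc / 2))))) as [_ [Je [_ HJ]]].
  - intros u v Hu Hv. apply (ray_ex_RInt _ al); try lra. intros; apply regularized_cont; auto.
  - intros u v Hu Hv. apply (ray_ex_RInt_Cmod _ al); try lra. intros; apply regularized_cont; auto.
  - intros y Hy. eapply Rle_trans. apply (regularized_ray_bound e He He2 y Hy).
    rewrite (Rmult_assoc A). apply Rmult_le_compat_l. auto. apply gauss_le_exp. lra.
  - exists Je. exact HJ.
Qed.

Lemma rotated_regularized_close e (L Je : C) : 0 < e -> e <= 1 -> e <= cc / 8 ->
  filterlim (fun b => @RInt C_R_CompleteNormedModule (fun y => g (polar y al)) 0 b)
    (Rbar_locally p_infty) (locally L) ->
  filterlim (fun b => @RInt C_R_CompleteNormedModule (fun y => regularized e (polar y al)) 0 b)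
    (Rbar_locally p_infty) (locally Je) ->
  Cmod (Je - L) <= e * reg_error_const.
Proof.
  intros He He1 He2 HL HJ. apply (lim_close _ _ _ _ _ HJ HL). exists 0. intros b Hb'.
  assert (Ex1 : @ex_RInt C_R_CompleteNormedModule (fun y => regularized e (polar y al)) 0 b)
    by (apply (ray_ex_RInt _ al); try lra; intros; apply regularized_cont; auto).
  assert (Ex2 : @ex_RInt C_R_CompleteNormedModule (fun y => g (polar y al)) 0 b)
    by (apply (ray_ex_RInt _ al); try lra; intros; eapply chirp_cont; eauto).
  assert (E : (@RInt C_R_CompleteNormedModule (fun y => regularized e (polar y al)) 0 b -
               @RInt C_R_CompleteNormedModule (fun y => g (polar y al)) 0 b)%C =
              @RInt C_R_CompleteNormedModule (fun y => (regularized e (polar y al) - g (polar y al))%C) 0 b).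
  { symmetry. apply (is_RInt_unique (V := C_R_CompleteNormedModule)).
    apply (is_RInt_minus (V := C_R_NormedModule)); apply (RInt_correct (V := C_R_CompleteNormedModule));
      assumption. }
  rewrite E, Cmod_norm.
  replace (e * reg_error_const) with (e * reg_error_const * exp (- 0)) by (rewrite Ropp_0, exp_0; ring).
  apply (RInt_exp_decay_bound (V := C_R_CompleteNormedModule)). lra.
  - apply (ex_RInt_minus (V := C_R_CompleteNormedModule)); assumption.
  - intros y Hy. rewrite <- Cmod_norm. apply regularization_error; auto; lra.
Qed.

Lemma real_regularized_value e (Le Je : C) : 0 < e -> e <= 1 -> e <= a * cos al ->
  is_integral_0_inf (real_regularized e) Le ->
  filterlim (fun b => @RInt C_R_CompleteNormedModule (fun y => regularized e (polar y al)) 0 b)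
    (Rbar_locally p_infty) (locally Je) ->
  Le = (eit al * Je)%C.
Proof.
  intros He He1 He2 HLe HJ.
  destruct (real_regularized_improper e He) as [_ [Le' [HLe' Hlim]]].
  replace Le with Le'.
  2:{ rewrite <- (is_RInt_gen_unique (V := C_R_CompleteNormedModule) _ _ HLe).
      symmetry. exact (is_RInt_gen_unique (V := C_R_CompleteNormedModule) _ _ HLe'). }
  apply (filterlim_locally_unique (K := C_AbsRing) (V := C_NormedModule) _ _ _ Hlim).
  apply (contour_limit _ (Rbar_locally_filter p_infty).(filter_filter) _ _ _ Je _ (Cmod_eit al) HJ
           (arc_int_vanishes_reg e He He1 He2)).
  exists 0. intros b Hb.
  rewrite (RInt_ext (V := C_R_CompleteNormedModule) (real_regularized e) (fun r => regularized e (RtoC r)))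
    by (intros x _; symmetry; apply regularized_real).
  apply (cauchy_sector (regularized e) al b); try lra. intros; apply regularized_diff; auto.
Qed.

Lemma real_regularized_error e (L Le : C) : 0 < e -> e <= 1 -> e <= cc / 8 -> e <= a * cos al ->
  filterlim (fun b => @RInt C_R_CompleteNormedModule (fun y => g (polar y al)) 0 b)
    (Rbar_locally p_infty) (locally L) ->
  is_integral_0_inf (real_regularized e) Le ->
  Cmod (Le - eit al * L) <= e * reg_error_const.
Proof.
  intros He He1 He2 He3 HL HLe. pose proof (ray_decay_pos a al Ha Hal) as Hcc. fold cc in Hcc.
  destruct (rotated_regularized_limit e ltac:(lra) ltac:(lra)) as [Je HJ].
  rewrite (real_regularized_value e Le Je He He1 He3 HLe HJ).
  replace (eit al * Je - eit al * L)%C with (eit al * (Je - L))%C by ring.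
  rewrite Cmod_mult, Cmod_eit, Rmult_1_l.
  exact (rotated_regularized_close e L Je He He1 He2 HL HJ).
Qed.

(** Part (i): the regularized real integral equals e^{i al} times the
    regularized rotated one, which is within O(e) of e^{i al} L. *)
Theorem part_i :
  abs_integrable_0_inf (rotated_integrand a y1 al f) /\
  (forall eps : R, 0 < eps ->
     abs_integrable_0_inf
       (fun y => Cmult (RtoC (exp (- eps * (y - y0)^2))) (real_integrand a y1 f y))) /\
  exists (L : C) (I : R -> C),
    is_integral_0_inf (rotated_integrand a y1 al f) L /\
    (forall eps : R, 0 < eps ->
       is_integral_0_inf
         (fun y => Cmult (RtoC (exp (- eps * (y - y0)^2))) (real_integrand a y1 f y))
         (I eps)) /\
    filterlim I (at_right 0) (locally (Cmult (cexp ((0:R), al)) L)).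
Proof.
  destruct (rotated_improper a y1 al f Ha Hal Hf A B HA HB f_ray_bound) as [Habs [L [HL Hlim]]].
  split; [exact Habs|]. split; [intros e He; apply (real_regularized_improper e He)|].
  set (I e := @RInt_gen C_R_CompleteNormedModule (real_regularized e) (at_point 0) (Rbar_locally p_infty)).
  assert (HI : forall e, 0 < e -> is_integral_0_inf (real_regularized e) (I e)).
  { intros e He. destruct (real_regularized_improper e He) as [_ [Le [HLe _]]].
    unfold I. rewrite (is_RInt_gen_unique (V := C_R_CompleteNormedModule) _ _ HLe). exact HLe. }
  exists L, I. split; [exact HL|]. split; [exact HI|].
  pose proof (ray_decay_pos a al Ha Hal) as Hcc. fold cc in Hcc.
  destruct (trig_facts al al Hal ltac:(lra)) as (_ & Hca & _).
  pose proof reg_error_const_ge0 as HM.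
  apply filterlim_Cmod; [apply within_filter, locally_filter|]. intros eta Heta.
  set (d := Rmin (Rmin 1 (cc / 8)) (Rmin (a * cos al) (eta / (reg_error_const + 1)))).
  assert (Hd : 0 < d).
  { unfold d. repeat apply Rmin_pos; try lra. apply Rmult_lt_0_compat; lra. apply Rdiv_lt_0_compat; lra. }
  exists (mkposreal d Hd). intros e He_ball He.
  assert (Hed : e < d).
  { change (Rabs (e - 0) < d) in He_ball. rewrite Rminus_0_r, Rabs_right in He_ball by lra. exact He_ball. }
  assert (Hd1 : d <= 1) by (unfold d; eapply Rle_trans; apply Rmin_l).
  assert (Hd2 : d <= cc / 8) by (unfold d; eapply Rle_trans; [apply Rmin_l| apply Rmin_r]).
  assert (Hd3 : d <= a * cos al) by (unfold d; eapply Rle_trans; [apply Rmin_r| apply Rmin_l]).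
  assert (Hd4 : d <= eta / (reg_error_const + 1)) by (unfold d; eapply Rle_trans; [apply Rmin_r| apply Rmin_r]).
  change (cexp (0, al)) with (eit al).
  eapply Rle_lt_trans. apply (real_regularized_error e L (I e)); auto; lra.
  assert (He' : e < eta / (reg_error_const + 1)) by lra.
  apply Rmult_lt_compat_r with (r := reg_error_const + 1) in He'; [|lra].
  field_simplify in He'; [|lra]. nra.
Qed.

End PartI.

Theorem corollary2p2 (a y1 alpha : R) (Omega : C -> Prop) (f : C -> C) :
  0 < a -> 0 < alpha < PI / 2 ->
  open Omega -> (forall z, sector alpha z -> Omega z) ->
  holomorphic_on Omega f ->
  (* (i) *)
  ((exists A B : R, 0 <= A /\ 0 <= B /\
       forall z, sector alpha z -> Cmod (f z) <= A * exp (B * Cmod z)) ->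
   forall y0 : R,
     abs_integrable_0_inf (rotated_integrand a y1 alpha f) /\
     (forall eps : R, 0 < eps ->
        abs_integrable_0_inf
          (fun y => Cmult (RtoC (exp (- eps * (y - y0)^2))) (real_integrand a y1 f y))) /\
     exists (L : C) (I : R -> C),
       is_integral_0_inf (rotated_integrand a y1 alpha f) L /\
       (forall eps : R, 0 < eps ->
          is_integral_0_inf
            (fun y => Cmult (RtoC (exp (- eps * (y - y0)^2))) (real_integrand a y1 f y))
            (I eps)) /\
       filterlim I (at_right 0) (locally (Cmult (cexp ((0:R), alpha)) L)))
  /\
  (* (ii) *)
  ((exists A B : R, 0 <= A /\ 0 <= B /\
       forall z, sector alpha z -> Cmod (f z) <= A * exp (B * Im z)) ->
     abs_integrable_0_inf (rotated_integrand a y1 alpha f) /\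
     (forall R0 : R, 0 < R0 -> abs_integrable_0_R (real_integrand a y1 f) R0) /\
     exists (L : C) (I : R -> C),
       is_integral_0_inf (rotated_integrand a y1 alpha f) L /\
       (forall R0 : R, 0 < R0 -> is_integral_0_R (real_integrand a y1 f) R0 (I R0)) /\
       filterlim I (Rbar_locally p_infty) (locally (Cmult (cexp ((0:R), alpha)) L))).
Proof.
  intros Ha Hal _ Hsub Hhol.
  (* only holomorphy on the closed sector is used *)
  assert (Hf : forall z, sector alpha z -> ex_derive (K := C_AbsRing) (V := C_NormedModule) f z)
    by (intros z Hz; apply Hhol, Hsub, Hz).
  split.
  - intros [A [B [HA [HB Hb]]]] y0. exact (part_i a y1 alpha f Ha Hal Hf A B HA HB Hb y0).
  - intros [A [B [HA [HB Hb]]]]. exact (part_ii a y1 alpha f Ha Hal Hf A B HA HB Hb).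
Qed.
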